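(* Let $0<q<1$, $M\in\mathbb{N}$, $r=q^{-M}$, and let $a,b,c,d,f,g,v,w$ be complex parameters with $\max\{|ac|,|ad|,|bc|,|bd|,|q/(bc)|\}<1$. Then \begin{align*} &\int_c^d\frac{\left(\frac{qt}{c},\frac{qt}{d};q\right)_\infty}{(at,bt;q)_\infty}\sum_{k=0}^\infty\frac{\left(r,f,g,\frac{c}{t},abcd;q\right)_k\left(\frac{qt}{bcd}\right)^k}{(v,w,ac,q;q)_k}\;{}_3\Phi_2\left[\begin{matrix}rq^k,fq^k,gq^k;\\ vq^k,wq^k;\end{matrix}\;q;\,q\right]{\rm d}_qt\\ &\qquad=\frac{d(1-q)\left(q,\frac{dq}{c},\frac{c}{d},abcd;q\right)_\infty}{(ac,ad,bc,bd;q)_\infty}\;{}_3\Phi_2\left[\begin{matrix}r,f,g;\\ v,w;\end{matrix}\;q;\,\frac{q}{bc}\right]. \end{align*}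
   Context: Throughout $0<q<1$. For complex $\alpha$: $(\alpha;q)_0=1$, $(\alpha;q)_n=\prod_{k=0}^{n-1}(1-\alpha q^k)$, $(\alpha;q)_\infty=\prod_{k=0}^\infty(1-\alpha q^k)$, and $(\alpha_1,\dots,\alpha_m;q)_n=(\alpha_1;q)_n\cdots(\alpha_m;q)_n$ (also for $n=\infty$). ${}_{3}\Phi_{2}\left[\begin{matrix}a_1,a_2,a_3;\\ b_1,b_2;\end{matrix}\,q;z\right]=\sum_{n=0}^\infty\frac{(a_1,a_2,a_3;q)_n}{(b_1,b_2;q)_n}\frac{z^n}{(q;q)_n}$. The $q$-integral (Jackson integral) is $\int_0^x F(t)\,{\rm d}_qt=x(1-q)\sum_{n=0}^\infty F(xq^n)q^n$ and $\int_c^dF(t)\,{\rm d}_qt=\int_0^dF(t)\,{\rm d}_qt-\int_0^cF(t)\,{\rm d}_qt$. *)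

From Stdlib Require Import Reals.
From Coquelicot Require Export Coquelicot.
Open Scope C_scope.

Definition Clim (u : nat -> C) : C :=
  (real (Lim_seq (fun n => Re (u n))), real (Lim_seq (fun n => Im (u n)))).

Fixpoint Cpown (x : C) (n : nat) : C :=
  match n with O => 1 | S m => Cpown x m * x end.

Fixpoint Cpsum (u : nat -> C) (N : nat) : C :=
  match N with O => 0 | S m => Cpsum u m + u m end.

Definition Csum (u : nat -> C) : C := Clim (Cpsum u).

Fixpoint qpoch (a q : C) (n : nat) : C :=
  match n with O => 1 | S m => qpoch a q m * (1 - a * Cpown q m) end.
Definition qpoch_inf (a q : C) : C := Clim (qpoch a q).

Definition phi32 (a1 a2 a3 b1 b2 q z : C) : C :=
  Csum (fun n => qpoch a1 q n * qpoch a2 q n * qpoch a3 q n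
                 / (qpoch b1 q n * qpoch b2 q n * qpoch q q n) * Cpown z n).

Definition qint0 (q : C) (F : C -> C) (x : C) : C :=
  x * (1 - q) * Csum (fun n => F (x * Cpown q n) * Cpown q n).
Definition qint (q : C) (F : C -> C) (c d : C) : C :=
  qint0 q F d - qint0 q F c.

From Stdlib Require Import Reals Lra Lia Classical FunctionalExtensionality.
From Coquelicot Require Import Coquelicot.
Open Scope C_scope.

(* Since r = q^-M, the k-series in the integrand and every 3Phi2 involved
   terminate. With W(t) = (qt/c, qt/d;q)_oo / (at, bt;q)_oo, the identity
   (c/t;q)_k t^k = (-c)^k q^(k(k-1)/2) (qt/(c q^k);q)_k turns W(t) (c/t;q)_k t^k into a
   multiple of the same weight with c replaced by c q^k, so the Al-Salam--Verma integral
     int_c^d W(t) d_qt = d (1-q) (q, dq/c, c/d, abcd;q)_oo / (ac, ad, bc, bd;q)_oo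
   gives int_c^d W(t) (c/t;q)_k t^k d_qt = (ac, bc;q)_k d^k / (abcd;q)_k * int_c^d W.
   Summing along the diagonals k + n = m of the resulting double sum, the inner sum
   collapses by the terminating identity sum_k [m,k]_q (z;q)_k (q/z)^k q^(m-k) = (q/z)^m
   with z = bc, which leaves the 3Phi2 at argument q/(bc).
   The Al-Salam--Verma integral itself follows from the q-difference equation of
   (t/c, t/d;q)_oo / (at, bt;q)_oo, which vanishes at t = c and t = d: it gives
   (1 - abcd) I(aq, b) = (1 - ac)(1 - ad) I(a, b) and symmetrically in b. Iterating and
   letting a, b -> 0 by dominated convergence reduces everything to I(0, 0), which is read
   off from the case a = q/c, b = q/d, where the weight is identically 1. *)

(** * Limits of complex sequences *)

Definition is_Clim_seq (u : nat -> C) (l : C) : Prop :=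
  forall eps : R, (0 < eps)%R ->
  exists N : nat, forall n, (N <= n)%nat -> (Cmod (u n - l) < eps)%R.

Lemma im_le_Cmod (z : C) : (Rabs (Im z) <= Cmod z)%R.
Proof.
  destruct z as [x y]. unfold Cmod; simpl.
  rewrite <- sqrt_Rsqr_abs. apply sqrt_le_1_alt. unfold Rsqr. nra.
Qed.

Lemma Cmod_le_abs_re_im (z : C) : (Cmod z <= Rabs (Re z) + Rabs (Im z))%R.
Proof.
  destruct z as [x y].
  assert (Hxy : (x, y) = (x, 0%R) + (0%R, y)) by (apply injective_projections; simpl; ring).
  simpl. rewrite Hxy at 1.
  eapply Rle_trans; [apply Cmod_triangle|].
  unfold Cmod; simpl.
  replace (x * (x * 1) + 0 * (0 * 1))%R with (Rsqr x) by (unfold Rsqr; ring).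
  replace (0 * (0 * 1) + y * (y * 1))%R with (Rsqr y) by (unfold Rsqr; ring).
  rewrite !sqrt_Rsqr_abs. lra.
Qed.

Lemma is_Clim_seq_Clim u l : is_Clim_seq u l -> Clim u = l.
Proof.
  intros H.
  assert (HRe : is_lim_seq (fun n => Re (u n)) (Re l)).
  { apply is_lim_seq_spec. intros eps. destruct (H eps (cond_pos eps)) as [N HN].
    exists N. intros n Hn. eapply Rle_lt_trans; [|exact (HN n Hn)].
    replace (Re (u n) - Re l)%R with (Re (u n - l)) by (unfold Re, Im; simpl; ring).
    apply re_le_Cmod. }
  assert (HIm : is_lim_seq (fun n => Im (u n)) (Im l)).
  { apply is_lim_seq_spec. intros eps. destruct (H eps (cond_pos eps)) as [N HN].
    exists N. intros n Hn. eapply Rle_lt_trans; [|exact (HN n Hn)].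
    replace (Im (u n) - Im l)%R with (Im (u n - l)) by (unfold Re, Im; simpl; ring).
    apply im_le_Cmod. }
  unfold Clim. rewrite (is_lim_seq_unique _ _ HRe), (is_lim_seq_unique _ _ HIm).
  destruct l; reflexivity.
Qed.

Lemma is_Clim_seq_unique u l1 l2 : is_Clim_seq u l1 -> is_Clim_seq u l2 -> l1 = l2.
Proof. intros H1 H2. rewrite <- (is_Clim_seq_Clim _ _ H1). now apply is_Clim_seq_Clim. Qed.

Lemma is_Clim_seq_ext_loc u v l N0 :
  (forall n, (N0 <= n)%nat -> u n = v n) -> is_Clim_seq u l -> is_Clim_seq v l.
Proof.
  intros Huv H eps Heps. destruct (H eps Heps) as [N HN]. exists (max N N0).
  intros n Hn. rewrite <- Huv by lia. apply HN. lia.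
Qed.

Lemma is_Clim_seq_ext u v l : (forall n, u n = v n) -> is_Clim_seq u l -> is_Clim_seq v l.
Proof. intros Huv. apply (is_Clim_seq_ext_loc u v l 0). auto. Qed.

Lemma is_Clim_seq_eq_l u l l' : is_Clim_seq u l -> l = l' -> is_Clim_seq u l'.
Proof. now intros H ->. Qed.

Lemma is_Clim_seq_const c : is_Clim_seq (fun _ => c) c.
Proof.
  intros eps Heps. exists 0%nat. intros.
  replace (c - c) with (RtoC 0) by ring. rewrite Cmod_0. lra.
Qed.

Lemma is_Clim_seq_sub_0 u l : is_Clim_seq u l <-> is_Clim_seq (fun n => u n - l) 0.
Proof.
  split; intros H eps Heps; destruct (H eps Heps) as [N HN]; exists N; intros n Hn;
    specialize (HN n Hn); [replace (u n - l - 0) with (u n - l) by ring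
                          | replace (u n - l) with (u n - l - 0) by ring]; exact HN.
Qed.

Lemma is_Clim_seq_plus u v l m :
  is_Clim_seq u l -> is_Clim_seq v m -> is_Clim_seq (fun n => u n + v n) (l + m).
Proof.
  intros Hu Hv eps Heps.
  destruct (Hu (eps / 2)%R) as [N1 H1]; [lra|].
  destruct (Hv (eps / 2)%R) as [N2 H2]; [lra|].
  exists (max N1 N2). intros n Hn.
  replace (u n + v n - (l + m)) with ((u n - l) + (v n - m)) by ring.
  eapply Rle_lt_trans; [apply Cmod_triangle|].
  specialize (H1 n ltac:(lia)). specialize (H2 n ltac:(lia)). lra.
Qed.

Lemma is_Clim_seq_0_mult_bounded u v K N0 :
  is_Clim_seq u 0 -> (forall n, (N0 <= n)%nat -> (Cmod (v n) <= K)%R) ->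
  is_Clim_seq (fun n => u n * v n) 0.
Proof.
  intros Hu Hv eps Heps.
  assert (HK : (0 < Rabs K + 1)%R) by (pose proof (Rabs_pos K); lra).
  destruct (Hu (eps / (Rabs K + 1))%R) as [N HN]; [apply Rdiv_lt_0_compat; lra|].
  exists (max N N0). intros n Hn.
  specialize (HN n ltac:(lia)). specialize (Hv n ltac:(lia)).
  replace (u n * v n - 0) with (u n * v n) by ring.
  replace (u n - 0) with (u n) in HN by ring. rewrite Cmod_mult.
  apply Rmult_lt_compat_r with (r := (Rabs K + 1)%R) in HN; [|lra].
  replace (eps / (Rabs K + 1) * (Rabs K + 1))%R with eps in HN by (field; lra).
  pose proof (Cmod_ge_0 (u n)). pose proof (Rle_abs K).
  eapply Rle_lt_trans; [|exact HN]. apply Rmult_le_compat_l; lra.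
Qed.

Lemma is_Clim_seq_bounded u l : is_Clim_seq u l -> exists K, forall n, (Cmod (u n) <= K)%R.
Proof.
  intros H. destruct (H 1%R ltac:(lra)) as [N HN].
  assert (Hinit : forall M, exists K, forall n, (n < M)%nat -> (Cmod (u n) <= K)%R).
  { induction M as [|M [K HK]].
    - exists 0%R. intros; lia.
    - exists (Rmax K (Cmod (u M))). intros n Hn.
      destruct (Nat.eq_dec n M) as [->|Hne]; [apply Rmax_r|].
      eapply Rle_trans; [apply HK; lia|apply Rmax_l]. }
  destruct (Hinit N) as [K HK].
  exists (Rmax K (Cmod l + 1)). intros n.
  destruct (Nat.lt_ge_cases n N) as [Hn|Hn].
  - eapply Rle_trans; [apply HK; auto|apply Rmax_l].
  - eapply Rle_trans; [|apply Rmax_r].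
    specialize (HN n Hn). replace (u n) with ((u n - l) + l) by ring.
    eapply Rle_trans; [apply Cmod_triangle|lra].
Qed.

Lemma is_Clim_seq_scal u l k : is_Clim_seq u l -> is_Clim_seq (fun n => k * u n) (k * l).
Proof.
  intros H. apply is_Clim_seq_sub_0. apply is_Clim_seq_sub_0 in H.
  apply (is_Clim_seq_ext (fun n => (u n - l) * k)); [intros; ring|].
  apply (is_Clim_seq_0_mult_bounded _ _ (Cmod k) 0); auto. intros; lra.
Qed.

Lemma is_Clim_seq_mult u v l m :
  is_Clim_seq u l -> is_Clim_seq v m -> is_Clim_seq (fun n => u n * v n) (l * m).
Proof.
  intros Hu Hv. destruct (is_Clim_seq_bounded _ _ Hv) as [K HK].
  apply is_Clim_seq_sub_0.
  apply (is_Clim_seq_ext (fun n => (u n - l) * v n + l * (v n - m))); [intros; ring|].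
  apply (is_Clim_seq_eq_l _ (0 + l * 0)); [|ring].
  apply is_Clim_seq_plus.
  - apply (is_Clim_seq_0_mult_bounded _ _ K 0); auto. exact (proj1 (is_Clim_seq_sub_0 _ _) Hu).
  - apply is_Clim_seq_scal. exact (proj1 (is_Clim_seq_sub_0 _ _) Hv).
Qed.

Lemma is_Clim_seq_minus u v l m :
  is_Clim_seq u l -> is_Clim_seq v m -> is_Clim_seq (fun n => u n - v n) (l - m).
Proof.
  intros Hu Hv. apply (is_Clim_seq_ext (fun n => u n + (-1) * v n)); [intros; ring|].
  replace (l - m) with (l + (-1) * m) by ring.
  apply is_Clim_seq_plus; auto. now apply is_Clim_seq_scal.
Qed.

Lemma is_Clim_seq_inv u (l : C) : l <> 0 -> is_Clim_seq u l -> is_Clim_seq (fun n => / u n) (/ l).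
Proof.
  intros Hl H.
  assert (Hl' : (0 < Cmod l)%R) by now apply Cmod_gt_0.
  destruct (H (Cmod l / 2)%R) as [N HN]; [lra|].
  (* eventually [|u n| >= |l|/2], so [/ (u n * l)] stays bounded *)
  assert (Hfar : forall n, (N <= n)%nat -> (Cmod l / 2 <= Cmod (u n))%R).
  { intros n Hn. specialize (HN n Hn).
    pose proof (Cmod_triangle (u n) (l - u n)) as Htri.
    replace (u n + (l - u n)) with l in Htri by ring.
    rewrite <- Cmod_opp in HN. replace (- (u n - l)) with (l - u n) in HN by ring. lra. }
  assert (Hnz : forall n, (N <= n)%nat -> u n <> 0).
  { intros n Hn E. specialize (Hfar n Hn). rewrite E, Cmod_0 in Hfar. lra. }
  apply is_Clim_seq_sub_0.
  apply (is_Clim_seq_ext_loc (fun n => (l - u n) * / (u n * l)) _ _ N).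
  { intros n Hn. field. split; auto. }
  apply (is_Clim_seq_0_mult_bounded _ _ (2 / (Cmod l * Cmod l))%R N).
  - apply (is_Clim_seq_ext (fun n => (-1) * (u n - l))); [intros; ring|].
    apply (is_Clim_seq_eq_l _ ((-1) * 0)); [|ring].
    apply is_Clim_seq_scal. exact (proj1 (is_Clim_seq_sub_0 _ _) H).
  - intros n Hn. specialize (Hfar n Hn). specialize (Hnz n Hn).
    assert (0 < Cmod (u n))%R by now apply Cmod_gt_0.
    rewrite Cmod_inv by (apply Cmult_neq_0; auto). rewrite Cmod_mult.
    unfold Rdiv. rewrite Rinv_mult.
    apply Rle_trans with (/ (Cmod l / 2) * / Cmod l)%R.
    + apply Rmult_le_compat_r; [left; apply Rinv_0_lt_compat; lra|].
      apply Rinv_le_contravar; lra.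
    + right. field. lra.
Qed.

Lemma is_Clim_seq_div u v (l m : C) :
  m <> 0 -> is_Clim_seq u l -> is_Clim_seq v m -> is_Clim_seq (fun n => u n / v n) (l / m).
Proof. intros. apply is_Clim_seq_mult; auto. now apply is_Clim_seq_inv. Qed.

Lemma is_Clim_seq_incr_n u l k : is_Clim_seq u l -> is_Clim_seq (fun n => u (n + k)%nat) l.
Proof. intros H eps Heps. destruct (H eps Heps) as [N HN]. exists N. intros. apply HN. lia. Qed.

Lemma is_Clim_seq_subseq u l (phi : nat -> nat) :
  (forall n, (n <= phi n)%nat) -> is_Clim_seq u l -> is_Clim_seq (fun n => u (phi n)) l.
Proof.
  intros Hphi H eps Heps. destruct (H eps Heps) as [N HN].
  exists N. intros n Hn. apply HN. specialize (Hphi n). lia.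
Qed.

Lemma is_Clim_seq_ball_le u l z B N0 :
  is_Clim_seq u l -> (forall n, (N0 <= n)%nat -> (Cmod (u n - z) <= B)%R) ->
  (Cmod (l - z) <= B)%R.
Proof.
  intros H Hb. apply Rnot_lt_le. intros Hlt.
  destruct (H (Cmod (l - z) - B)%R) as [N HN]; [lra|].
  set (n := max N N0).
  specialize (HN n ltac:(lia)). specialize (Hb n ltac:(lia)).
  pose proof (Cmod_triangle (u n - z) (l - u n)) as Htri.
  replace (u n - z + (l - u n)) with (l - z) in Htri by ring.
  rewrite <- Cmod_opp in HN. replace (- (u n - l)) with (l - u n) in HN by ring.
  lra.
Qed.

Lemma ex_Clim_seq_Cauchy u :
  (forall eps, (0 < eps)%R -> exists N, forall n m, (N <= n)%nat -> (N <= m)%nat ->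
     (Cmod (u n - u m) < eps)%R) ->
  exists l, is_Clim_seq u l.
Proof.
  intros H.
  assert (HRe : ex_finite_lim_seq (fun n => Re (u n))).
  { apply ex_lim_seq_cauchy_corr. intros eps. destruct (H eps (cond_pos eps)) as [N HN].
    exists N. intros n m Hn Hm. eapply Rle_lt_trans; [|apply (HN n m Hn Hm)].
    replace (Re (u n) - Re (u m))%R with (Re (u n - u m)) by (unfold Re, Im; simpl; ring).
    apply re_le_Cmod. }
  assert (HIm : ex_finite_lim_seq (fun n => Im (u n))).
  { apply ex_lim_seq_cauchy_corr. intros eps. destruct (H eps (cond_pos eps)) as [N HN].
    exists N. intros n m Hn Hm. eapply Rle_lt_trans; [|apply (HN n m Hn Hm)].
    replace (Im (u n) - Im (u m))%R with (Im (u n - u m)) by (unfold Re, Im; simpl; ring).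
    apply im_le_Cmod. }
  destruct HRe as [lr Hr], HIm as [li Hi].
  exists (lr, li). intros eps Heps.
  apply is_lim_seq_spec in Hr, Hi.
  destruct (Hr (mkposreal (eps / 2) ltac:(lra))) as [N1 H1].
  destruct (Hi (mkposreal (eps / 2) ltac:(lra))) as [N2 H2].
  exists (max N1 N2). intros n Hn.
  eapply Rle_lt_trans; [apply Cmod_le_abs_re_im|].
  specialize (H1 n ltac:(lia)). specialize (H2 n ltac:(lia)). simpl in H1, H2.
  unfold Re, Im in *; simpl. unfold Rminus in H1, H2. lra.
Qed.

(** * Finite sums and series *)

Lemma Cmod_Cpown (x : C) n : Cmod (Cpown x n) = (Cmod x ^ n)%R.
Proof. induction n; simpl; [apply Cmod_1|]. rewrite Cmod_mult, IHn. ring. Qed.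

Lemma Cmod_Cpown_R (q : R) n : (0 <= q)%R -> Cmod (Cpown (RtoC q) n) = (q ^ n)%R.
Proof. intros. rewrite Cmod_Cpown, Cmod_R, Rabs_pos_eq; auto. Qed.

Lemma Cpown_neq_0 (x : C) n : x <> 0 -> Cpown x n <> 0.
Proof. intros Hx. induction n; simpl; [exact C1_nz|]. now apply Cmult_neq_0. Qed.

Lemma Cpown_add (x : C) m n : Cpown x (m + n) = Cpown x m * Cpown x n.
Proof.
  induction n; [rewrite Nat.add_0_r; simpl; ring|].
  rewrite Nat.add_succ_r. simpl. rewrite IHn. ring.
Qed.

Lemma Cpown_mult (x y : C) n : Cpown (x * y) n = Cpown x n * Cpown y n.
Proof. induction n; simpl; [ring|]. rewrite IHn. ring. Qed.

Lemma Cpsum_ext u v N : (forall n, (n < N)%nat -> u n = v n) -> Cpsum u N = Cpsum v N.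
Proof. induction N; intros H; simpl; auto. rewrite IHN, H; auto. Qed.

Lemma Cpsum_plus u v N : Cpsum (fun n => u n + v n) N = Cpsum u N + Cpsum v N.
Proof. induction N; simpl; [ring|]. rewrite IHN. ring. Qed.

Lemma Cpsum_minus u v N : Cpsum (fun n => u n - v n) N = Cpsum u N - Cpsum v N.
Proof. induction N; simpl; [ring|]. rewrite IHN. ring. Qed.

Lemma Cpsum_scal k u N : Cpsum (fun n => k * u n) N = k * Cpsum u N.
Proof. induction N; simpl; [ring|]. rewrite IHN. ring. Qed.

Lemma Cpsum_mult_r u x N : Cpsum u N * x = Cpsum (fun n => u n * x) N.
Proof. induction N; simpl; [ring|]. rewrite <- IHN. ring. Qed.

Lemma Cpsum_add u k n : Cpsum u (k + n) = Cpsum u k + Cpsum (fun j => u (k + j)%nat) n.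
Proof.
  induction n; simpl; [rewrite Nat.add_0_r; ring|].
  rewrite Nat.add_succ_r. simpl. rewrite IHn. ring.
Qed.

Lemma Cpsum_Sl u n : Cpsum u (S n) = u O + Cpsum (fun k => u (S k)) n.
Proof. induction n; simpl in *; [ring|]. rewrite IHn. ring. Qed.

Lemma Cpsum_telescope (u : nat -> C) n : Cpsum (fun j => u (S j) - u j) n = u n - u O.
Proof. induction n; simpl; [ring|]. rewrite IHn. ring. Qed.

Lemma Cpsum_const_0 n : Cpsum (fun _ => RtoC 0) n = 0.
Proof. induction n; simpl; [reflexivity|]. rewrite IHn. ring. Qed.

Lemma Cpsum_triangle (h : nat -> nat -> C) N :
  Cpsum (fun k => Cpsum (h k) (N - k)) N =
  Cpsum (fun m => Cpsum (fun k => h k (m - k)%nat) (S m)) N.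
Proof.
  induction N; [reflexivity|].
  change (Cpsum (fun k => Cpsum (h k) (S N - k)) (S N)) with
    (Cpsum (fun k => Cpsum (h k) (S N - k)) N + Cpsum (h N) (S N - N)).
  rewrite (Cpsum_ext (fun k => Cpsum (h k) (S N - k))
                     (fun k => Cpsum (h k) (N - k) + h k (N - k)%nat)).
  2: { intros k Hk. replace (S N - k)%nat with (S (N - k)) by lia. reflexivity. }
  rewrite Cpsum_plus, IHN.
  change (Cpsum (fun m => Cpsum (fun k => h k (m - k)%nat) (S m)) (S N)) with
    (Cpsum (fun m => Cpsum (fun k => h k (m - k)%nat) (S m)) N
     + Cpsum (fun k => h k (N - k)%nat) (S N)).
  replace (S N - N)%nat with 1%nat by lia.
  change (Cpsum (fun k => h k (N - k)%nat) (S N)) with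
    (Cpsum (fun k => h k (N - k)%nat) N + h N (N - N)%nat).
  replace (N - N)%nat with O by lia. simpl. ring.
Qed.

Definition is_Cseries (u : nat -> C) (l : C) : Prop := is_Clim_seq (Cpsum u) l.

Lemma is_Cseries_Csum u l : is_Cseries u l -> Csum u = l.
Proof. apply is_Clim_seq_Clim. Qed.

Lemma is_Cseries_ext u v l : (forall n, u n = v n) -> is_Cseries u l -> is_Cseries v l.
Proof. intros Huv. apply is_Clim_seq_ext. intros; apply Cpsum_ext; auto. Qed.

Lemma is_Cseries_plus u v a b :
  is_Cseries u a -> is_Cseries v b -> is_Cseries (fun n => u n + v n) (a + b).
Proof.
  intros. apply (is_Clim_seq_ext (fun n => Cpsum u n + Cpsum v n)).
  - intros; now rewrite Cpsum_plus.
  - now apply is_Clim_seq_plus.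
Qed.

Lemma is_Cseries_scal k u a : is_Cseries u a -> is_Cseries (fun n => k * u n) (k * a).
Proof.
  intros. apply (is_Clim_seq_ext (fun n => k * Cpsum u n)).
  - intros; now rewrite Cpsum_scal.
  - now apply is_Clim_seq_scal.
Qed.

Lemma is_Cseries_minus u v a b :
  is_Cseries u a -> is_Cseries v b -> is_Cseries (fun n => u n - v n) (a - b).
Proof.
  intros. apply (is_Clim_seq_ext (fun n => Cpsum u n - Cpsum v n)).
  - intros; now rewrite Cpsum_minus.
  - now apply is_Clim_seq_minus.
Qed.

Lemma is_Cseries_incr_n u l k :
  is_Cseries u l -> is_Cseries (fun n => u (k + n)%nat) (l - Cpsum u k).
Proof.
  intros H. apply (is_Clim_seq_ext (fun n => Cpsum u (n + k) - Cpsum u k)).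
  - intros n. rewrite Nat.add_comm, Cpsum_add. ring.
  - apply is_Clim_seq_minus; [now apply is_Clim_seq_incr_n|apply is_Clim_seq_const].
Qed.

Lemma is_Cseries_finite (u : nat -> C) N :
  (forall n, (N <= n)%nat -> u n = 0) -> is_Cseries u (Cpsum u N).
Proof.
  intros H. apply (is_Clim_seq_ext_loc (fun _ => Cpsum u N) _ _ N); [|apply is_Clim_seq_const].
  intros n Hn. replace n with (N + (n - N))%nat by lia. cbv beta.
  rewrite (Cpsum_add u N), (Cpsum_ext (fun j => u (N + j)%nat) (fun _ => RtoC 0)), Cpsum_const_0;
    [ring|].
  intros j _. apply H. lia.
Qed.

Lemma Csum_finite (u : nat -> C) N :
  (forall n, (N <= n)%nat -> u n = 0) -> Csum u = Cpsum u N.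
Proof. intros H. now apply is_Cseries_Csum, is_Cseries_finite. Qed.

Lemma is_Cseries_telescope (u : nat -> C) l :
  is_Clim_seq u l -> is_Cseries (fun n => u n - u (S n)) (u O - l).
Proof.
  intros H. apply (is_Clim_seq_ext (fun n => u O - u n)).
  - intros n. induction n; simpl; [ring|]. rewrite <- IHn. ring.
  - apply is_Clim_seq_minus; [apply is_Clim_seq_const|exact H].
Qed.

Lemma pow_lt_eventually (q y : R) :
  (0 <= q < 1)%R -> (0 < y)%R -> exists N, forall n, (N <= n)%nat -> (q ^ n < y)%R.
Proof.
  intros Hq Hy. destruct (pow_lt_1_zero q ltac:(rewrite Rabs_pos_eq; lra) y Hy) as [N HN].
  exists N. intros n Hn. specialize (HN n Hn). rewrite Rabs_pos_eq in HN; auto. apply pow_le; lra.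
Qed.

Lemma geom_tail_lt (q K eps : R) :
  (0 <= q < 1)%R -> (0 <= K)%R -> (0 < eps)%R -> exists N, (K * q ^ N / (1 - q) < eps)%R.
Proof.
  intros Hq HK Heps.
  destruct (pow_lt_eventually q (eps * (1 - q) / (K + 1)) Hq) as [N HN].
  { apply Rdiv_lt_0_compat; nra. }
  exists N. specialize (HN N (le_n N)).
  assert (HqN : (0 <= q ^ N)%R) by (apply pow_le; lra).
  apply Rmult_lt_compat_r with (r := (K + 1)%R) in HN; [|lra].
  replace (eps * (1 - q) / (K + 1) * (K + 1))%R with (eps * (1 - q))%R in HN by (field; lra).
  apply Rmult_lt_reg_r with (1 - q)%R; [lra|].
  replace (K * q ^ N / (1 - q) * (1 - q))%R with (K * q ^ N)%R by (field; lra).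
  nra.
Qed.

Lemma Cpsum_geom_dominated_tail (u : nat -> C) (q K : R) :
  (0 <= q < 1)%R -> (forall j, (Cmod (u j) <= K * q ^ j)%R) ->
  forall M n, (Cmod (Cpsum u (M + n) - Cpsum u M) <= K * q ^ M / (1 - q))%R.
Proof.
  intros Hq Hu M n.
  assert (HK : (0 <= K)%R) by (specialize (Hu O); pose proof (Cmod_ge_0 (u O)); simpl in Hu; lra).
  assert (Hfin : (Cmod (Cpsum u (M + n) - Cpsum u M) <= K * q ^ M * (1 - q ^ n) / (1 - q))%R).
  { induction n.
    - rewrite Nat.add_0_r. replace (Cpsum u M - Cpsum u M) with (RtoC 0) by ring.
      rewrite Cmod_0. simpl.
      replace (K * q ^ M * (1 - 1) / (1 - q))%R with 0%R by (field; lra). lra.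
    - rewrite Nat.add_succ_r. simpl.
      replace (Cpsum u (M + n) + u (M + n)%nat - Cpsum u M)
        with ((Cpsum u (M + n) - Cpsum u M) + u (M + n)%nat) by ring.
      eapply Rle_trans; [apply Cmod_triangle|].
      eapply Rle_trans; [apply Rplus_le_compat; [apply IHn|apply Hu]|].
      rewrite pow_add. right. field. lra. }
  eapply Rle_trans; [apply Hfin|].
  unfold Rdiv. apply Rmult_le_compat_r; [left; apply Rinv_0_lt_compat; lra|].
  assert (0 <= q ^ n)%R by (apply pow_le; lra).
  assert (0 <= K * q ^ M)%R by (apply Rmult_le_pos; auto; apply pow_le; lra).
  nra.
Qed.

Lemma is_Cseries_geom_dominated (u : nat -> C) (q K : R) :
  (0 <= q < 1)%R -> (forall j, (Cmod (u j) <= K * q ^ j)%R) ->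
  exists l, is_Cseries u l /\ forall M, (Cmod (l - Cpsum u M) <= K * q ^ M / (1 - q))%R.
Proof.
  intros Hq Hu.
  assert (HK : (0 <= K)%R) by (specialize (Hu O); pose proof (Cmod_ge_0 (u O)); simpl in Hu; lra).
  assert (Htail := Cpsum_geom_dominated_tail u q K Hq Hu).
  destruct (ex_Clim_seq_Cauchy (Cpsum u)) as [l Hl].
  { intros eps Heps. destruct (geom_tail_lt q K (eps / 2) Hq HK) as [N HN]; [lra|].
    exists N. intros n m Hn Hm.
    pose proof (Htail N (n - N)%nat) as Hn'. pose proof (Htail N (m - N)%nat) as Hm'.
    replace (N + (n - N))%nat with n in Hn' by lia.
    replace (N + (m - N))%nat with m in Hm' by lia.
    replace (Cpsum u n - Cpsum u m)
      with ((Cpsum u n - Cpsum u N) + - (Cpsum u m - Cpsum u N)) by ring.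
    eapply Rle_lt_trans; [apply Cmod_triangle|]. rewrite Cmod_opp. lra. }
  exists l. split; [exact Hl|]. intros M.
  apply (is_Clim_seq_ball_le _ _ _ _ M Hl).
  intros n Hn. replace n with (M + (n - M))%nat by lia. apply Htail.
Qed.

Lemma is_Clim_seq_geom (q : R) : (0 <= q < 1)%R -> is_Clim_seq (Cpown (RtoC q)) 0.
Proof.
  intros Hq eps Heps. destruct (pow_lt_eventually q eps Hq Heps) as [N HN].
  exists N. intros n Hn. replace (Cpown (RtoC q) n - 0) with (Cpown (RtoC q) n) by ring.
  rewrite Cmod_Cpown_R by lra. auto.
Qed.

Lemma is_Cseries_geom (q : R) :
  (0 <= q < 1)%R -> is_Cseries (Cpown (RtoC q)) (/ (1 - RtoC q)).
Proof.
  intros Hq.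
  assert (Hne : 1 - RtoC q <> 0).
  { intro E. apply (f_equal Re) in E. simpl in E. lra. }
  apply (is_Clim_seq_ext (fun n => (1 - Cpown (RtoC q) n) / (1 - RtoC q))).
  { intros n. induction n; simpl; [field; auto|]. rewrite <- IHn. field; auto. }
  apply (is_Clim_seq_eq_l _ ((1 - 0) / (1 - RtoC q))); [|field; auto].
  apply is_Clim_seq_div; [auto| |apply is_Clim_seq_const].
  apply is_Clim_seq_minus; [apply is_Clim_seq_const|now apply is_Clim_seq_geom].
Qed.

Lemma is_Clim_seq_Cpsum (f : nat -> nat -> C) (g : nat -> C) M :
  (forall n, is_Clim_seq (fun N => f N n) (g n)) ->
  is_Clim_seq (fun N => Cpsum (f N) M) (Cpsum g M).
Proof.
  intros H. induction M; simpl; [apply is_Clim_seq_const|]. now apply is_Clim_seq_plus.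
Qed.

Lemma Csum_dominated_cv (f : nat -> nat -> C) (g : nat -> C) (q K : R) :
  (0 <= q < 1)%R -> (forall N n, (Cmod (f N n) <= K * q ^ n)%R) ->
  (forall n, is_Clim_seq (fun N => f N n) (g n)) ->
  is_Clim_seq (fun N => Csum (f N)) (Csum g).
Proof.
  intros Hq Hf Hfg.
  assert (HK : (0 <= K)%R)
    by (specialize (Hf O O); pose proof (Cmod_ge_0 (f O O)); simpl in Hf; lra).
  assert (Hg : forall n, (Cmod (g n) <= K * q ^ n)%R).
  { intros n. replace (g n) with (g n - 0) by ring.
    apply (is_Clim_seq_ball_le _ _ _ _ 0 (Hfg n)).
    intros N _. replace (f N n - 0) with (f N n) by ring. auto. }
  destruct (is_Cseries_geom_dominated g q K Hq Hg) as [lg [Hlg Tg]].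
  rewrite (is_Cseries_Csum _ _ Hlg).
  intros eps Heps.
  destruct (geom_tail_lt q K (eps / 3) Hq HK) as [M HM]; [lra|].
  destruct (is_Clim_seq_Cpsum f g M Hfg (eps / 3)%R) as [N0 HN0]; [lra|].
  exists N0. intros N HN. specialize (HN0 N HN).
  destruct (is_Cseries_geom_dominated (f N) q K Hq (Hf N)) as [l [Hl Tl]].
  rewrite (is_Cseries_Csum _ _ Hl).
  specialize (Tl M). specialize (Tg M).
  replace (l - lg)
    with ((l - Cpsum (f N) M) + (Cpsum (f N) M - Cpsum g M) + - (lg - Cpsum g M)) by ring.
  eapply Rle_lt_trans; [apply Cmod_triangle|]. rewrite Cmod_opp.
  eapply Rle_lt_trans; [apply Rplus_le_compat_r, Cmod_triangle|].
  lra.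
Qed.

(** * Finite q-products and a terminating q-binomial identity *)

Lemma qpoch_add (x q : C) k n : qpoch x q (k + n) = qpoch x q k * qpoch (x * Cpown q k) q n.
Proof.
  induction n; [rewrite Nat.add_0_r; simpl; ring|].
  rewrite Nat.add_succ_r. simpl. rewrite IHn, Cpown_add. ring.
Qed.

Lemma qpoch_Sl (x q : C) n : qpoch x q (S n) = (1 - x) * qpoch (x * q) q n.
Proof.
  replace (S n) with (1 + n)%nat by lia. rewrite qpoch_add. simpl.
  replace (x * (1 * q)) with (x * q) by ring. ring.
Qed.

Lemma qpoch_0 (q : C) n : qpoch 0 q n = 1.
Proof. induction n; simpl; auto. rewrite IHn. ring. Qed.

Lemma qpoch_neq_0 (x q : C) k : (forall n, x * Cpown q n <> 1) -> qpoch x q k <> 0.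
Proof.
  intros H. induction k; simpl; [exact C1_nz|]. apply Cmult_neq_0; auto.
  intro E. apply (H k). replace (x * Cpown q k) with (1 - (1 - x * Cpown q k)) by ring.
  rewrite E. ring.
Qed.

Lemma qpoch_eq_0 (x q : C) m k : (m < k)%nat -> x * Cpown q m = 1 -> qpoch x q k = 0.
Proof.
  intros Hm Hx. replace k with (S m + (k - S m))%nat by lia.
  rewrite qpoch_add. simpl. rewrite Hx. ring.
Qed.


Fixpoint qpow_sub (t c q : C) (k : nat) : C :=
  match k with O => 1 | S k' => qpow_sub t c q k' * (t - c * Cpown q k') end.

Lemma qpow_sub_qpoch_div (t c q : C) k :
  t <> 0 -> qpoch (c / t) q k * Cpown t k = qpow_sub t c q k.
Proof. intros Ht. induction k; simpl; [ring|]. rewrite <- IHk. field. auto. Qed.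

Lemma qpow_sub_qpoch_rev (t c q : C) k :
  c <> 0 -> q <> 0 ->
  qpow_sub 0 c q k * qpoch (q * t / (c * Cpown q k)) q k = qpow_sub t c q k.
Proof.
  intros Hc Hq0. induction k; [simpl; field; auto|].
  assert (Hk : Cpown q k <> 0) by now apply Cpown_neq_0.
  rewrite qpoch_Sl.
  replace (q * t / (c * Cpown q (S k)) * q) with (q * t / (c * Cpown q k)) by (simpl; field; auto).
  simpl qpow_sub. rewrite <- IHk. simpl Cpown. field. auto.
Qed.

Section QBinomial.

Variable q : C.

Fixpoint qbinom (m k : nat) : C :=
  match m, k with
  | _, O => 1
  | O, S _ => 0
  | S m', S k' => qbinom m' k' + Cpown q (S k') * qbinom m' (S k')
  end.

Lemma qbinom_0_r m : qbinom m O = 1.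
Proof. now destruct m. Qed.

Lemma qbinom_small m k : (m < k)%nat -> qbinom m k = 0.
Proof.
  revert k. induction m; intros k Hk; destruct k; try lia; [reflexivity|].
  simpl. rewrite !IHm by lia. ring.
Qed.

Lemma qbinom_qpoch m k : (k <= m)%nat -> qbinom m k * qpoch q q k * qpoch q q (m - k) = qpoch q q m.
Proof.
  revert k. induction m; intros k Hk.
  - destruct k; [simpl; ring|lia].
  - destruct k; [simpl; ring|].
    simpl qbinom. replace (S m - S k)%nat with (m - k)%nat by lia.
    change (qpoch q q (S k)) with (qpoch q q k * (1 - q * Cpown q k)).
    change (qpoch q q (S m)) with (qpoch q q m * (1 - q * Cpown q m)).
    destruct (Nat.eq_dec k m) as [->|Hne].
    + rewrite (qbinom_small m (S m)) by lia.
      pose proof (IHm m (le_n m)) as IH. replace (m - m)%nat with O in IH |- * by lia.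
      simpl qpoch in IH |- *.
      transitivity (qbinom m m * qpoch q q m * 1 * (1 - q * Cpown q m)); [ring|].
      rewrite IH. ring.
    + replace (m - k)%nat with (S (m - S k)) by lia.
      change (qpoch q q (S (m - S k))) with (qpoch q q (m - S k) * (1 - q * Cpown q (m - S k))).
      pose proof (IHm k ltac:(lia)) as IH1. pose proof (IHm (S k) ltac:(lia)) as IH2.
      replace (m - k)%nat with (S (m - S k)) in IH1 by lia.
      change (qpoch q q (S (m - S k))) with (qpoch q q (m - S k) * (1 - q * Cpown q (m - S k)))
        in IH1.
      change (qpoch q q (S k)) with (qpoch q q k * (1 - q * Cpown q k)) in IH2.
      assert (Hpow : Cpown q (S k) * Cpown q (m - S k) = Cpown q m)
        by (rewrite <- Cpown_add; f_equal; lia).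
      transitivity (qbinom m k * qpoch q q k * (qpoch q q (m - S k) * (1 - q * Cpown q (m - S k)))
                      * (1 - q * Cpown q k)
                    + Cpown q (S k) * (qbinom m (S k) * (qpoch q q k * (1 - q * Cpown q k))
                                       * qpoch q q (m - S k)) * (1 - q * Cpown q (m - S k)));
        [cbn [Cpown]; ring|].
      rewrite IH1, IH2.
      transitivity (qpoch q q m * (1 - q * Cpown q k + Cpown q (S k)
                                   - q * (Cpown q (S k) * Cpown q (m - S k))));
        [simpl Cpown; ring|].
      rewrite Hpow. simpl Cpown. ring.
Qed.

Lemma Cpown_qnewton (u : C) m :
  Cpsum (fun k => qbinom m k * Cpown q (m - k) * qpow_sub u q q k) (S m) = Cpown u m.
Proof.
  induction m; [simpl; ring|].
  assert (HS : forall k, qpow_sub u q q (S k) = qpow_sub u q q k * (u - Cpown q (S k)))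
    by (intros; simpl; f_equal; f_equal; ring).
  rewrite Cpsum_Sl, qbinom_0_r. replace (S m - 0)%nat with (S m) by lia.
  rewrite (Cpsum_ext _ (fun k => qbinom m k * Cpown q (m - k) * qpow_sub u q q (S k)
                                 + Cpown q (S m) * (qbinom m (S k) * qpow_sub u q q (S k)))).
  2: { intros k Hk. simpl qbinom. replace (S m - S k)%nat with (m - k)%nat by lia.
       assert (Hpow : Cpown q (S k) * Cpown q (m - k) = Cpown q (S m))
         by (rewrite <- Cpown_add; f_equal; lia).
       rewrite <- Hpow. simpl Cpown. ring. }
  rewrite Cpsum_plus, Cpsum_scal.
  change (Cpown u (S m)) with (Cpown u m * u). rewrite <- IHm, Cpsum_mult_r.
  rewrite (Cpsum_ext (fun k => qbinom m k * Cpown q (m - k) * qpow_sub u q q k * u)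
             (fun k => qbinom m k * Cpown q (m - k) * qpow_sub u q q (S k)
                       + Cpown q (S m) * (qbinom m k * qpow_sub u q q k))).
  2: { intros k Hk. rewrite HS.
       assert (Hpow : Cpown q (m - k) * Cpown q (S k) = Cpown q (S m))
         by (rewrite <- Cpown_add; f_equal; lia).
       rewrite <- Hpow. ring. }
  rewrite Cpsum_plus, Cpsum_scal, (Cpsum_Sl (fun k => qbinom m k * qpow_sub u q q k)), qbinom_0_r.
  change (Cpsum (fun k => qbinom m (S k) * qpow_sub u q q (S k)) (S m)) with
    (Cpsum (fun k => qbinom m (S k) * qpow_sub u q q (S k)) m
     + qbinom m (S m) * qpow_sub u q q (S m)).
  rewrite (qbinom_small m (S m)) by lia. simpl qpow_sub. ring.
Qed.

Lemma qpoch_qpow_sub (z : C) k :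
  z <> 0 -> qpoch z q k * Cpown (q / z) k = qpow_sub (q / z) q q k.
Proof.
  intros Hz. induction k; [simpl; ring|].
  simpl. rewrite <- IHk. field. auto.
Qed.

Lemma Cpsum_qbinom_qpoch (z : C) m :
  z <> 0 -> (forall j, qpoch q q j <> 0) ->
  Cpsum (fun k => qpoch z q k * Cpown (q / z) k * Cpown q (m - k)
                  / (qpoch q q k * qpoch q q (m - k))) (S m)
  = Cpown (q / z) m / qpoch q q m.
Proof.
  intros Hz Hqq. rewrite <- Cpown_qnewton.
  assert (Hdiv : forall u N x, Cpsum u N / x = Cpsum (fun k => u k / x) N)
    by (intros; unfold Cdiv; apply Cpsum_mult_r).
  rewrite Hdiv.
  apply Cpsum_ext. intros k Hk.
  rewrite <- qpoch_qpow_sub by auto. rewrite <- (qbinom_qpoch m k) by lia.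
  assert (Hb : qbinom m k <> 0).
  { intro E. apply (Hqq m). rewrite <- (qbinom_qpoch m k), E by lia. ring. }
  field. repeat split; auto.
Qed.

End QBinomial.

Lemma phi32_terminating (a1 a2 a3 b1 b2 q z : C) N :
  (forall n, (N <= n)%nat -> qpoch a1 q n = 0) ->
  phi32 a1 a2 a3 b1 b2 q z =
  Cpsum (fun n => qpoch a1 q n * qpoch a2 q n * qpoch a3 q n
                  / (qpoch b1 q n * qpoch b2 q n * qpoch q q n) * Cpown z n) N.
Proof.
  intros H. apply Csum_finite. intros n Hn. rewrite H by auto. unfold Cdiv. ring.
Qed.

Lemma qgrid_shift_neq_1 (v q : C) k :
  (forall n, v * Cpown q n <> 1) -> forall n, v * Cpown q k * Cpown q n <> 1.
Proof. intros H n. rewrite <- Cmult_assoc, <- Cpown_add. apply H. Qed.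

(* Expanding [(r, f, g; q)_(k+n)] and summing along the antidiagonals [k + n = m], the
   inner sum collapses by [Cpsum_qbinom_qpoch]. *)
Lemma phi32_terminating_expansion (q r f g v w z : C) M :
  r * Cpown q M = 1 -> z <> 0 -> (forall j, qpoch q q j <> 0) ->
  (forall n, v * Cpown q n <> 1) -> (forall n, w * Cpown q n <> 1) ->
  Cpsum (fun k => qpoch r q k * qpoch f q k * qpoch g q k * qpoch z q k
                  / (qpoch v q k * qpoch w q k * qpoch q q k) * Cpown (q / z) k
                  * phi32 (r * Cpown q k) (f * Cpown q k) (g * Cpown q k)
                          (v * Cpown q k) (w * Cpown q k) q q) (S M)
  = phi32 r f g v w q (q / z).
Proof.
  intros Hr Hz Hqq Hv Hw.
  rewrite (phi32_terminating r f g v w q (q / z) (S M))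
    by (intros n Hn; apply (qpoch_eq_0 r q M n); auto; lia).
  set (Cf := fun m => qpoch r q m * qpoch f q m * qpoch g q m / (qpoch v q m * qpoch w q m)).
  set (h := fun k n => qpoch z q k * Cpown (q / z) k * Cpown q n / (qpoch q q k * qpoch q q n)).
  rewrite (Cpsum_ext _ (fun k => Cpsum (fun n => Cf (k + n)%nat * h k n) (S M - k))).
  2: { intros k Hk.
       rewrite (phi32_terminating _ _ _ _ _ q q (S M - k)).
       2: { intros n Hn. apply (qpoch_eq_0 _ _ (M - k) n); [lia|].
            rewrite <- Cmult_assoc, <- Cpown_add. now replace (k + (M - k))%nat with M by lia. }
       rewrite <- Cpsum_scal. apply Cpsum_ext. intros n Hn.
       unfold Cf, h. rewrite !qpoch_add.
       pose proof (qpoch_neq_0 v q k Hv). pose proof (qpoch_neq_0 w q k Hw).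
       pose proof (qpoch_neq_0 _ q n (qgrid_shift_neq_1 v q k Hv)).
       pose proof (qpoch_neq_0 _ q n (qgrid_shift_neq_1 w q k Hw)).
       pose proof (Hqq k). pose proof (Hqq n).
       field. repeat split; auto. }
  rewrite (Cpsum_triangle (fun k n => Cf (k + n)%nat * h k n) (S M)).
  apply Cpsum_ext. intros m Hm.
  rewrite (Cpsum_ext _ (fun k => Cf m * h k (m - k)%nat))
    by (intros k Hk; do 2 f_equal; lia).
  rewrite Cpsum_scal. unfold h. rewrite Cpsum_qbinom_qpoch by auto.
  unfold Cf. pose proof (qpoch_neq_0 v q m Hv). pose proof (qpoch_neq_0 w q m Hw).
  pose proof (Hqq m). field. repeat split; auto.
Qed.

(** * Infinite q-products *)

Lemma exp_le_compat (x y : R) : (x <= y)%R -> (exp x <= exp y)%R.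
Proof. intros [H|H]; [left; now apply exp_increasing|right; now rewrite H]. Qed.

Section QCalculus.

Variable q : R.
Hypothesis Hq : (0 < q < 1)%R.
Notation qc := (RtoC q).

Lemma qc_neq_0 : qc <> 0.
Proof. intro E. apply (f_equal Re) in E. simpl in E. lra. Qed.

Lemma Cmod_qc_lt_1 : (Cmod qc < 1)%R.
Proof. rewrite Cmod_R, Rabs_pos_eq; lra. Qed.

Lemma is_Clim_seq_qgrid (y : C) : is_Clim_seq (fun n => y * Cpown qc n) 0.
Proof.
  apply (is_Clim_seq_eq_l _ (y * 0)); [|ring].
  apply is_Clim_seq_scal, is_Clim_seq_geom. lra.
Qed.

Lemma qgrid_neq_1 (x : C) : (Cmod x < 1)%R -> forall n, x * Cpown qc n <> 1.
Proof.
  intros Hx n E. apply (f_equal Cmod) in E.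
  rewrite Cmod_mult, Cmod_Cpown_R, Cmod_1 in E by lra.
  assert (q ^ n <= 1)%R by (rewrite <- (pow1 n); apply pow_incr; lra).
  assert (0 < q ^ n)%R by (apply pow_lt; lra).
  pose proof (Cmod_ge_0 x). nra.
Qed.

Lemma Cmod_qpoch_le (x : C) n : (Cmod (qpoch x qc n) <= exp (Cmod x / (1 - q)))%R.
Proof.
  assert (Hexp : (Cmod (qpoch x qc n) <= exp (Cmod x * (1 - q ^ n) / (1 - q)))%R).
  { induction n; simpl.
    - rewrite Cmod_1. replace (Cmod x * (1 - 1) / (1 - q))%R with 0%R by (field; lra).
      rewrite exp_0. lra.
    - rewrite Cmod_mult.
      (* [|1 - y| <= 1 + |y| <= exp |y|] *)
      assert (Hfac : (Cmod (1 - x * Cpown qc n) <= exp (Cmod x * q ^ n))%R).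
      { eapply Rle_trans; [unfold Cminus; apply Cmod_triangle|].
        rewrite Cmod_opp, Cmod_1, Cmod_mult, Cmod_Cpown_R by lra. apply exp_ineq1_le. }
      eapply Rle_trans; [apply Rmult_le_compat; try apply Cmod_ge_0; [apply IHn|apply Hfac]|].
      rewrite <- exp_plus. right. f_equal. field. lra. }
  eapply Rle_trans; [exact Hexp|]. apply exp_le_compat. unfold Rdiv.
  apply Rmult_le_compat_r; [left; apply Rinv_0_lt_compat; lra|].
  assert (0 < q ^ n)%R by (apply pow_lt; lra). pose proof (Cmod_ge_0 x). nra.
Qed.

Lemma Cmod_qpoch_S_sub (x : C) n :
  (Cmod (qpoch x qc (S n) - qpoch x qc n) <= Cmod x * exp (Cmod x / (1 - q)) * q ^ n)%R.
Proof.
  simpl. replace (qpoch x qc n * (1 - x * Cpown qc n) - qpoch x qc n)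
    with (- (x * Cpown qc n * qpoch x qc n)) by ring.
  rewrite Cmod_opp, !Cmod_mult, Cmod_Cpown_R by lra.
  pose proof (Cmod_qpoch_le x n). pose proof (Cmod_ge_0 x).
  assert (0 < q ^ n)%R by (apply pow_lt; lra).
  replace (Cmod x * exp (Cmod x / (1 - q)) * q ^ n)%R
    with (Cmod x * q ^ n * exp (Cmod x / (1 - q)))%R by ring.
  apply Rmult_le_compat_l; nra.
Qed.

Lemma qpoch_cv_near_1 (x : C) : exists l, is_Clim_seq (qpoch x qc) l /\
  (Cmod (l - 1) <= Cmod x * exp (Cmod x / (1 - q)) / (1 - q))%R.
Proof.
  set (dx := fun n => qpoch x qc (S n) - qpoch x qc n).
  destruct (is_Cseries_geom_dominated dx q (Cmod x * exp (Cmod x / (1 - q))))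
    as [l [Hl Hbound]]; [lra|apply Cmod_qpoch_S_sub|].
  assert (Htel : forall n, qpoch x qc n = 1 + Cpsum dx n).
  { intros n. unfold dx. rewrite Cpsum_telescope. simpl. ring. }
  exists (1 + l). split.
  - apply (is_Clim_seq_ext (fun n => 1 + Cpsum dx n)); [intros; now rewrite Htel|].
    apply is_Clim_seq_plus; [apply is_Clim_seq_const|exact Hl].
  - specialize (Hbound O). simpl in Hbound.
    replace (1 + l - 1) with (l - 0) by ring. rewrite Rmult_1_r in Hbound. exact Hbound.
Qed.

Lemma is_Clim_seq_qpoch_inf (x : C) : is_Clim_seq (qpoch x qc) (qpoch_inf x qc).
Proof.
  destruct (qpoch_cv_near_1 x) as [l [Hl _]].
  unfold qpoch_inf. now rewrite (is_Clim_seq_Clim _ _ Hl).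
Qed.

Lemma qpoch_inf_shift (x : C) k : qpoch_inf x qc = qpoch x qc k * qpoch_inf (x * Cpown qc k) qc.
Proof.
  apply (is_Clim_seq_unique (fun n => qpoch x qc (n + k))).
  - apply is_Clim_seq_incr_n, is_Clim_seq_qpoch_inf.
  - apply (is_Clim_seq_ext (fun n => qpoch x qc k * qpoch (x * Cpown qc k) qc n)).
    + intros n. now rewrite Nat.add_comm, qpoch_add.
    + apply is_Clim_seq_scal, is_Clim_seq_qpoch_inf.
Qed.

Lemma qpoch_inf_Sl (x : C) : qpoch_inf x qc = (1 - x) * qpoch_inf (x * qc) qc.
Proof.
  rewrite (qpoch_inf_shift x 1). simpl.
  replace (x * (1 * qc)) with (x * qc) by ring. ring.
Qed.

Lemma qpoch_inf_0 : qpoch_inf 0 qc = 1.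
Proof.
  apply is_Clim_seq_Clim, (is_Clim_seq_ext (fun _ => 1)); [|apply is_Clim_seq_const].
  intros; now rewrite qpoch_0.
Qed.

Lemma qpoch_inf_eq_0 (x : C) j : x * Cpown qc j = 1 -> qpoch_inf x qc = 0.
Proof. intros H. rewrite (qpoch_inf_shift x (S j)), (qpoch_eq_0 x qc j (S j)); auto. ring. Qed.

Lemma qpoch_inf_qgrid_neq_0 (y : C) n :
  qpoch_inf y qc <> 0 -> qpoch_inf (y * Cpown qc n) qc <> 0.
Proof. intros H E. apply H. rewrite (qpoch_inf_shift y n), E. ring. Qed.

Let Kq := (exp (/ (1 - q)) / (1 - q))%R.

Lemma qpoch_inf_sub_1_le (x : C) :
  (Cmod x <= 1)%R -> (Cmod (qpoch_inf x qc - 1) <= Cmod x * Kq)%R.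
Proof.
  intros Hx. destruct (qpoch_cv_near_1 x) as [l [Hl Hnear]].
  unfold qpoch_inf. rewrite (is_Clim_seq_Clim _ _ Hl).
  eapply Rle_trans; [exact Hnear|]. unfold Kq, Rdiv. rewrite Rmult_assoc.
  apply Rmult_le_compat_l; [apply Cmod_ge_0|].
  apply Rmult_le_compat_r; [left; apply Rinv_0_lt_compat; lra|].
  apply exp_le_compat. rewrite <- (Rmult_1_l (/ (1 - q))) at 2.
  apply Rmult_le_compat_r; [left; apply Rinv_0_lt_compat; lra|exact Hx].
Qed.

Let Kq_pos : (0 < Kq)%R.
Proof. unfold Kq. apply Rdiv_lt_0_compat; [apply exp_pos|lra]. Qed.

Lemma qpoch_inf_neq_0_near_0 (x : C) : (Cmod x < / (1 + Kq))%R -> qpoch_inf x qc <> 0.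
Proof.
  intros Hx E. pose proof Kq_pos. pose proof (Cmod_ge_0 x).
  assert (Hx' : (Cmod x * (1 + Kq) < 1)%R).
  { apply Rmult_lt_compat_r with (r := (1 + Kq)%R) in Hx; [|lra].
    rewrite Rinv_l in Hx by lra. exact Hx. }
  pose proof (qpoch_inf_sub_1_le x ltac:(nra)) as Hle.
  rewrite E in Hle. replace (0 - 1) with (- (1)) in Hle by ring.
  rewrite Cmod_opp, Cmod_1 in Hle. nra.
Qed.

Lemma is_Clim_seq_qpoch_inf_1 (z : nat -> C) :
  is_Clim_seq z 0 -> is_Clim_seq (fun n => qpoch_inf (z n) qc) 1.
Proof.
  intros Hz eps Heps. pose proof Kq_pos.
  destruct (Hz (Rmin 1 (eps / (Kq + 1)))) as [N HN].
  { apply Rmin_pos; [lra|apply Rdiv_lt_0_compat; lra]. }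
  exists N. intros n Hn. specialize (HN n Hn).
  replace (z n - 0) with (z n) in HN by ring.
  pose proof (Rmin_l 1 (eps / (Kq + 1))). pose proof (Rmin_r 1 (eps / (Kq + 1))).
  eapply Rle_lt_trans; [apply qpoch_inf_sub_1_le; lra|].
  assert (Hlt : (Cmod (z n) * (Kq + 1) < eps)%R).
  { apply Rmult_lt_reg_r with (/ (Kq + 1))%R; [apply Rinv_0_lt_compat; lra|].
    rewrite Rmult_assoc, Rinv_r, Rmult_1_r by lra. lra. }
  pose proof (Cmod_ge_0 (z n)). nra.
Qed.

(* Far enough along the grid [x q^k] the infinite product is close to 1. *)
Lemma qpoch_inf_neq_0 (x : C) : (forall n, x * Cpown qc n <> 1) -> qpoch_inf x qc <> 0.
Proof.
  intros H. pose proof Kq_pos.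
  destruct (is_Clim_seq_qgrid x (/ (1 + Kq))%R) as [k Hk];
    [apply Rinv_0_lt_compat; lra|].
  specialize (Hk k (le_n k)). replace (x * Cpown qc k - 0) with (x * Cpown qc k) in Hk by ring.
  rewrite (qpoch_inf_shift x k).
  apply Cmult_neq_0; [now apply qpoch_neq_0|now apply qpoch_inf_neq_0_near_0].
Qed.

Lemma qpoch_inf_neq_0_lt_1 (x : C) : (Cmod x < 1)%R -> qpoch_inf x qc <> 0.
Proof. intros Hx. now apply qpoch_inf_neq_0, qgrid_neq_1. Qed.

Lemma qpoch_inf_eq_0_inv (x : C) : qpoch_inf x qc = 0 -> exists n, x * Cpown qc n = 1.
Proof.
  intros H. apply NNPP. intros Hn. apply (qpoch_inf_neq_0 x); auto.
  intros n E. apply Hn. now exists n.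
Qed.

(** * Jackson integrals and the Al-Salam--Verma integral *)

Lemma is_Cseries_jackson (F : C -> C) x L :
  is_Clim_seq (fun n => F (x * Cpown qc n)) L ->
  is_Cseries (fun n => F (x * Cpown qc n) * Cpown qc n)
             (Csum (fun n => F (x * Cpown qc n) * Cpown qc n)).
Proof.
  intros H. destruct (is_Clim_seq_bounded _ _ H) as [K HK].
  destruct (is_Cseries_geom_dominated (fun n => F (x * Cpown qc n) * Cpown qc n) q K)
    as [l [Hl _]]; [lra| |].
  - intros j. rewrite Cmod_mult, Cmod_Cpown_R by lra.
    apply Rmult_le_compat_r; [apply pow_le; lra|auto].
  - now rewrite (is_Cseries_Csum _ _ Hl).
Qed.

Lemma qint0_ext (F G : C -> C) x :
  (forall n, F (x * Cpown qc n) = G (x * Cpown qc n)) -> qint0 qc F x = qint0 qc G x.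
Proof.
  intros H. unfold qint0. do 2 f_equal.
  apply functional_extensionality. intros n. now rewrite H.
Qed.

Lemma qint0_Cpsum (G : nat -> C -> C) (be : nat -> C) (x : C) N :
  (forall k, exists L, is_Clim_seq (fun n => G k (x * Cpown qc n)) L) ->
  qint0 qc (fun t => Cpsum (fun k => be k * G k t) N) x =
  Cpsum (fun k => be k * qint0 qc (G k) x) N.
Proof.
  intros HG.
  assert (HT : is_Cseries (fun n => Cpsum (fun k => be k * G k (x * Cpown qc n)) N * Cpown qc n)
                 (Cpsum (fun k => be k * Csum (fun n => G k (x * Cpown qc n) * Cpown qc n)) N)).
  { induction N; simpl.
    - apply (is_Cseries_ext (fun _ => 0)); [intros; simpl; ring|].
      apply (is_Cseries_finite _ 0). auto.
    - apply (is_Cseries_ext (fun n =>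
               Cpsum (fun k => be k * G k (x * Cpown qc n)) N * Cpown qc n
               + be N * (G N (x * Cpown qc n) * Cpown qc n))); [intros; simpl; ring|].
      apply is_Cseries_plus; [exact IHN|apply is_Cseries_scal].
      destruct (HG N) as [L HL]. exact (is_Cseries_jackson _ x L HL). }
  unfold qint0 at 1. rewrite (is_Cseries_Csum _ _ HT).
  unfold qint0. rewrite <- Cpsum_scal. apply Cpsum_ext. intros; ring.
Qed.

Lemma qint0_scal (D : C) (H : C -> C) x L :
  is_Clim_seq (fun n => H (x * Cpown qc n)) L ->
  qint0 qc (fun t => D * H t) x = D * qint0 qc H x.
Proof.
  intros HL. pose proof (qint0_Cpsum (fun _ => H) (fun _ => D) x 1) as E. simpl in E.
  rewrite <- (Cplus_0_l (D * qint0 qc H x)), <- E; [|intros; now exists L].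
  apply qint0_ext. intros; ring.
Qed.

Lemma qint0_qgrid_shift (F : C -> C) (x : C) k l :
  is_Cseries (fun n => F (x * Cpown qc n) * Cpown qc n) l ->
  (forall m, (m < k)%nat -> F (x * Cpown qc m) = 0) ->
  qint0 qc F (x * Cpown qc k) = qint0 qc F x.
Proof.
  intros Hl Hz.
  assert (Hk : Cpown qc k <> 0) by (apply Cpown_neq_0, qc_neq_0).
  pose proof (is_Cseries_incr_n _ _ k Hl) as Htail.
  rewrite (Cpsum_ext _ (fun _ => RtoC 0)), Cpsum_const_0 in Htail;
    [|intros m Hm; rewrite Hz; auto; ring].
  assert (Hl' : is_Cseries (fun n => F (x * Cpown qc k * Cpown qc n) * Cpown qc n)
                           (/ Cpown qc k * (l - 0))).
  { eapply is_Cseries_ext; [|apply is_Cseries_scal; exact Htail].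
    intros n. cbv beta. rewrite Cpown_add, (Cmult_assoc x). field. auto. }
  unfold qint0. rewrite (is_Cseries_Csum _ _ Hl'), (is_Cseries_Csum _ _ Hl). field. auto.
Qed.

Lemma is_Clim_seq_qpoch_inf_ratio (k1 k2 k3 k4 x : C) :
  is_Clim_seq (fun n =>
    qpoch_inf (k1 * (x * Cpown qc n)) qc * qpoch_inf (k2 * (x * Cpown qc n)) qc
    / (qpoch_inf (k3 * (x * Cpown qc n)) qc * qpoch_inf (k4 * (x * Cpown qc n)) qc)) 1.
Proof.
  assert (Hk : forall k, is_Clim_seq (fun n => qpoch_inf (k * (x * Cpown qc n)) qc) 1).
  { intros k. apply is_Clim_seq_qpoch_inf_1.
    apply (is_Clim_seq_ext (fun n => k * x * Cpown qc n)); [intros; ring|apply is_Clim_seq_qgrid]. }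
  apply (is_Clim_seq_eq_l _ (1 * 1 / (1 * 1))); [|field].
  apply is_Clim_seq_div; [rewrite Cmult_1_l; exact C1_nz| |]; now apply is_Clim_seq_mult.
Qed.

(* The prefix [asv] refers to Al-Salam and Verma. *)
Definition asv_weight (a b c d t : C) : C :=
  qpoch_inf (qc * t / c) qc * qpoch_inf (qc * t / d) qc
  / (qpoch_inf (a * t) qc * qpoch_inf (b * t) qc).

Definition asv_integral (a b c d : C) : C := qint qc (asv_weight a b c d) c d.

Definition asv_primitive (a b c d t : C) : C :=
  qpoch_inf (t / c) qc * qpoch_inf (t / d) qc / (qpoch_inf (a * t) qc * qpoch_inf (b * t) qc).

Lemma is_Clim_seq_asv_weight (a b c d x : C) :
  is_Clim_seq (fun n => asv_weight a b c d (x * Cpown qc n)) 1.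
Proof.
  eapply is_Clim_seq_ext; [|apply (is_Clim_seq_qpoch_inf_ratio (qc / c) (qc / d) a b x)].
  intros n. unfold asv_weight. do 2 f_equal; f_equal; unfold Cdiv; ring.
Qed.

Lemma is_Clim_seq_asv_primitive (a b c d x : C) :
  is_Clim_seq (fun n => asv_primitive a b c d (x * Cpown qc n)) 1.
Proof.
  eapply is_Clim_seq_ext; [|apply (is_Clim_seq_qpoch_inf_ratio (/ c) (/ d) a b x)].
  intros n. unfold asv_primitive. do 2 f_equal; f_equal; unfold Cdiv; ring.
Qed.

Lemma asv_primitive_qdiff (a b c d t : C) :
  c <> 0 -> d <> 0 -> qpoch_inf (a * t) qc <> 0 -> qpoch_inf (b * t) qc <> 0 ->
  asv_primitive a b c d t - asv_primitive a b c d (t * qc) =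
  asv_weight a b c d t * ((a + b - / c - / d) * t + (/ (c * d) - a * b) * (t * t)).
Proof.
  intros Hc Hd Ha Hb. unfold asv_primitive, asv_weight.
  rewrite (qpoch_inf_Sl (t / c)), (qpoch_inf_Sl (t / d)), (qpoch_inf_Sl (a * t)),
    (qpoch_inf_Sl (b * t)) in *.
  replace (t / c * qc) with (qc * t / c) by (unfold Cdiv; ring).
  replace (t / d * qc) with (qc * t / d) by (unfold Cdiv; ring).
  replace (t * qc / c) with (qc * t / c) by (unfold Cdiv; ring).
  replace (t * qc / d) with (qc * t / d) by (unfold Cdiv; ring).
  replace (a * (t * qc)) with (a * t * qc) by ring.
  replace (b * (t * qc)) with (b * t * qc) by ring.
  assert (Ha1 : 1 - a * t <> 0) by (intro E; apply Ha; rewrite E; ring).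
  assert (Ha2 : qpoch_inf (a * t * qc) qc <> 0) by (intro E; apply Ha; rewrite E; ring).
  assert (Hb1 : 1 - b * t <> 0) by (intro E; apply Hb; rewrite E; ring).
  assert (Hb2 : qpoch_inf (b * t * qc) qc <> 0) by (intro E; apply Hb; rewrite E; ring).
  field. repeat split; auto.
Qed.

Lemma asv_weight_qa (a b c d t : C) :
  qpoch_inf (a * t) qc <> 0 -> qpoch_inf (b * t) qc <> 0 ->
  asv_weight (a * qc) b c d t = (1 - a * t) * asv_weight a b c d t.
Proof.
  intros Ha Hb. unfold asv_weight. rewrite (qpoch_inf_Sl (a * t)) in *.
  replace (a * qc * t) with (a * t * qc) by ring.
  assert (Ha1 : 1 - a * t <> 0) by (intro E; apply Ha; rewrite E; ring).
  assert (Ha2 : qpoch_inf (a * t * qc) qc <> 0) by (intro E; apply Ha; rewrite E; ring).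
  field. auto.
Qed.

Lemma is_Cseries_jackson_asv (a b c d x : C) :
  is_Cseries (fun n => asv_weight a b c d (x * Cpown qc n) * Cpown qc n)
    (Csum (fun n => asv_weight a b c d (x * Cpown qc n) * Cpown qc n)) /\
  is_Cseries (fun n => (x * Cpown qc n) * asv_weight a b c d (x * Cpown qc n) * Cpown qc n)
    (Csum (fun n => (x * Cpown qc n) * asv_weight a b c d (x * Cpown qc n) * Cpown qc n)).
Proof.
  split.
  - apply (is_Cseries_jackson (asv_weight a b c d) x 1), is_Clim_seq_asv_weight.
  - apply (is_Cseries_jackson (fun t => t * asv_weight a b c d t) x (0 * 1)).
    apply is_Clim_seq_mult; [apply is_Clim_seq_qgrid|apply is_Clim_seq_asv_weight].
Qed.

Lemma qint0_asv_weight_qa (a b c d x : C) :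
  qpoch_inf (a * x) qc <> 0 -> qpoch_inf (b * x) qc <> 0 ->
  qint0 qc (asv_weight (a * qc) b c d) x =
  qint0 qc (asv_weight a b c d) x - a * qint0 qc (fun t => t * asv_weight a b c d t) x.
Proof.
  intros Ha Hb. destruct (is_Cseries_jackson_asv a b c d x) as [HA HB].
  unfold qint0.
  erewrite is_Cseries_Csum;
    [|eapply is_Cseries_ext; [|exact (is_Cseries_minus _ _ _ _ HA (is_Cseries_scal a _ _ HB))]].
  - ring.
  - intros n. cbv beta. rewrite asv_weight_qa; [ring| |];
      rewrite Cmult_assoc; now apply qpoch_inf_qgrid_neq_0.
Qed.

(* Telescoping [asv_primitive] along the grid from [x], where it vanishes, down to [0]. *)
Lemma qint0_asv_qdiff (a b c d x : C) :
  c <> 0 -> d <> 0 -> qpoch_inf (a * x) qc <> 0 -> qpoch_inf (b * x) qc <> 0 ->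
  qpoch_inf (x / c) qc * qpoch_inf (x / d) qc = 0 ->
  (a + b - / c - / d) * qint0 qc (asv_weight a b c d) x
  + (/ (c * d) - a * b) * qint0 qc (fun t => t * asv_weight a b c d t) x = qc - 1.
Proof.
  intros Hc Hd Ha Hb Hx.
  destruct (is_Cseries_jackson_asv a b c d x) as [HA HB].
  set (A := Csum _) in HA. set (B := Csum _) in HB.
  set (al := a + b - / c - / d). set (be := / (c * d) - a * b).
  assert (Htel := is_Cseries_telescope _ _ (is_Clim_seq_asv_primitive a b c d x)).
  assert (Hx0 : asv_primitive a b c d (x * Cpown qc 0) = 0).
  { simpl. rewrite Cmult_1_r. unfold asv_primitive. rewrite Hx. unfold Cdiv. ring. }
  cbv beta in Htel. rewrite Hx0 in Htel.
  assert (Hlin : is_Cseries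
     (fun n => x * (al * (asv_weight a b c d (x * Cpown qc n) * Cpown qc n)
                   + be * (x * Cpown qc n * asv_weight a b c d (x * Cpown qc n) * Cpown qc n)))
     (x * (al * A + be * B))).
  { apply is_Cseries_scal, is_Cseries_plus; now apply is_Cseries_scal. }
  assert (E : x * (al * A + be * B) = 0 - 1).
  { apply (is_Clim_seq_unique _ _ _ Hlin). eapply is_Cseries_ext; [|exact Htel].
    intros n. cbv beta. simpl Cpown.
    replace (x * (Cpown qc n * qc)) with (x * Cpown qc n * qc) by ring.
    rewrite asv_primitive_qdiff; auto; [fold al be; ring| |];
      rewrite Cmult_assoc; now apply qpoch_inf_qgrid_neq_0. }
  unfold qint0. fold A B.
  transitivity ((1 - qc) * (x * (al * A + be * B))); [ring|]. rewrite E. ring.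
Qed.

Lemma asv_integral_qa (a b c d : C) :
  c <> 0 -> d <> 0 ->
  qpoch_inf (a * c) qc <> 0 -> qpoch_inf (a * d) qc <> 0 ->
  qpoch_inf (b * c) qc <> 0 -> qpoch_inf (b * d) qc <> 0 ->
  (1 - a * b * c * d) * asv_integral (a * qc) b c d =
  (1 - a * c) * (1 - a * d) * asv_integral a b c d.
Proof.
  intros Hc Hd Hac Had Hbc Hbd.
  assert (H1 : qpoch_inf 1 qc = 0) by (rewrite qpoch_inf_Sl; ring).
  assert (Zc : qpoch_inf (c / c) qc * qpoch_inf (c / d) qc = 0)
    by (replace (c / c) with (RtoC 1) by (field; auto); rewrite H1; ring).
  assert (Zd : qpoch_inf (d / c) qc * qpoch_inf (d / d) qc = 0)
    by (replace (d / d) with (RtoC 1) by (field; auto); rewrite H1; ring).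
  pose proof (qint0_asv_qdiff a b c d c Hc Hd Hac Hbc Zc) as Ec.
  pose proof (qint0_asv_qdiff a b c d d Hc Hd Had Hbd Zd) as Ed.
  unfold asv_integral, qint.
  rewrite (qint0_asv_weight_qa a b c d c), (qint0_asv_weight_qa a b c d d) by auto.
  set (Ic := qint0 qc (asv_weight a b c d) c) in *.
  set (Id := qint0 qc (asv_weight a b c d) d) in *.
  set (Jc := qint0 qc (fun t => t * asv_weight a b c d t) c) in *.
  set (Jd := qint0 qc (fun t => t * asv_weight a b c d t) d) in *.
  apply Ceq_minus.
  transitivity (- (a * c * d) *
    (((a + b - / c - / d) * Id + (/ (c * d) - a * b) * Jd)
     - ((a + b - / c - / d) * Ic + (/ (c * d) - a * b) * Jc))); [field; auto|].
  rewrite Ec, Ed. ring.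
Qed.

Lemma asv_integral_comm (a b c d : C) : asv_integral a b c d = asv_integral b a c d.
Proof.
  unfold asv_integral. f_equal. apply functional_extensionality. intros t.
  unfold asv_weight. now rewrite (Cmult_comm (qpoch_inf (a * t) qc)).
Qed.

Lemma asv_integral_qb (a b c d : C) :
  c <> 0 -> d <> 0 ->
  qpoch_inf (a * c) qc <> 0 -> qpoch_inf (a * d) qc <> 0 ->
  qpoch_inf (b * c) qc <> 0 -> qpoch_inf (b * d) qc <> 0 ->
  (1 - a * b * c * d) * asv_integral a (b * qc) c d =
  (1 - b * c) * (1 - b * d) * asv_integral a b c d.
Proof.
  intros. rewrite !(asv_integral_comm a). replace (a * b * c * d) with (b * a * c * d) by ring.
  now apply asv_integral_qa.
Qed.

Lemma asv_integral_qpow (a b c d : C) N :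
  c <> 0 -> d <> 0 ->
  qpoch_inf (a * c) qc <> 0 -> qpoch_inf (a * d) qc <> 0 ->
  qpoch_inf (b * c) qc <> 0 -> qpoch_inf (b * d) qc <> 0 ->
  asv_integral (a * Cpown qc N) (b * Cpown qc N) c d * qpoch (a * b * c * d) qc (N + N) =
  asv_integral a b c d * qpoch (a * c) qc N * qpoch (a * d) qc N
  * qpoch (b * c) qc N * qpoch (b * d) qc N.
Proof.
  intros Hc Hd Hac Had Hbc Hbd. induction N.
  - simpl. rewrite !Cmult_1_r. ring.
  - set (a' := a * Cpown qc N). set (b' := b * Cpown qc N).
    assert (Hgrid : forall y k, qpoch_inf y qc <> 0 -> qpoch_inf (y * Cpown qc k) qc <> 0)
      by (intros; now apply qpoch_inf_qgrid_neq_0).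
    assert (Ha'c : qpoch_inf (a' * c) qc <> 0)
      by (replace (a' * c) with (a * c * Cpown qc N) by (unfold a'; ring); auto).
    assert (Ha'd : qpoch_inf (a' * d) qc <> 0)
      by (replace (a' * d) with (a * d * Cpown qc N) by (unfold a'; ring); auto).
    assert (Hb'c : qpoch_inf (b' * c) qc <> 0)
      by (replace (b' * c) with (b * c * Cpown qc N) by (unfold b'; ring); auto).
    assert (Hb'd : qpoch_inf (b' * d) qc <> 0)
      by (replace (b' * d) with (b * d * Cpown qc N) by (unfold b'; ring); auto).
    assert (Ha'qc : qpoch_inf (a' * qc * c) qc <> 0)
      by (replace (a' * qc * c) with (a * c * Cpown qc (S N)) by (unfold a'; simpl; ring); auto).
    assert (Ha'qd : qpoch_inf (a' * qc * d) qc <> 0)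
      by (replace (a' * qc * d) with (a * d * Cpown qc (S N)) by (unfold a'; simpl; ring); auto).
    pose proof (asv_integral_qa a' b' c d Hc Hd Ha'c Ha'd Hb'c Hb'd) as Sa.
    pose proof (asv_integral_qb (a' * qc) b' c d Hc Hd Ha'qc Ha'qd Hb'c Hb'd) as Sb.
    replace (S N + S N)%nat with (N + N + 2)%nat by lia.
    rewrite qpoch_add, Cpown_add. simpl qpoch. simpl Cpown.
    replace (a * (Cpown qc N * qc)) with (a' * qc) by (unfold a'; ring).
    replace (b * (Cpown qc N * qc)) with (b' * qc) by (unfold b'; ring).
    replace (a * c * Cpown qc N) with (a' * c) by (unfold a'; ring).
    replace (a * d * Cpown qc N) with (a' * d) by (unfold a'; ring).
    replace (b * c * Cpown qc N) with (b' * c) by (unfold b'; ring).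
    replace (b * d * Cpown qc N) with (b' * d) by (unfold b'; ring).
    replace (a * b * c * d * (Cpown qc N * Cpown qc N)) with (a' * b' * c * d)
      by (unfold a', b'; ring).
    transitivity (qpoch (a * b * c * d) qc (N + N) * (1 - a' * b' * c * d)
                  * ((1 - a' * qc * b' * c * d) * asv_integral (a' * qc) (b' * qc) c d)); [ring|].
    rewrite Sb.
    transitivity (qpoch (a * b * c * d) qc (N + N) * (1 - b' * c) * (1 - b' * d)
                  * ((1 - a' * b' * c * d) * asv_integral (a' * qc) b' c d)); [ring|].
    rewrite Sa.
    transitivity ((1 - a' * c) * (1 - a' * d) * (1 - b' * c) * (1 - b' * d)
                  * (asv_integral a' b' c d * qpoch (a * b * c * d) qc (N + N))); [ring|].
    unfold a' at 3, b' at 3. rewrite IHN. ring.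
Qed.

Lemma asv_weight_00 (c d t : C) :
  asv_weight 0 0 c d t = qpoch_inf (qc * t / c) qc * qpoch_inf (qc * t / d) qc.
Proof. unfold asv_weight. rewrite !Cmult_0_l, qpoch_inf_0. field. Qed.

Lemma is_Clim_seq_inv_qpoch_inf_qgrid (y : C) :
  is_Clim_seq (fun m => / qpoch_inf (y * Cpown qc m) qc) (/ 1).
Proof.
  apply (is_Clim_seq_inv (fun m => qpoch_inf (y * Cpown qc m) qc)); [exact C1_nz|].
  apply is_Clim_seq_qpoch_inf_1, is_Clim_seq_qgrid.
Qed.

Lemma qint0_asv_weight_qpow_cv (a b c d x : C) :
  qpoch_inf (a * x) qc <> 0 -> qpoch_inf (b * x) qc <> 0 ->
  is_Clim_seq (fun N => qint0 qc (asv_weight (a * Cpown qc N) (b * Cpown qc N) c d) x)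
              (qint0 qc (asv_weight 0 0 c d) x).
Proof.
  intros Ha Hb.
  destruct (is_Clim_seq_bounded _ _ (is_Clim_seq_inv_qpoch_inf_qgrid (a * x))) as [Ka HKa].
  destruct (is_Clim_seq_bounded _ _ (is_Clim_seq_inv_qpoch_inf_qgrid (b * x))) as [Kb HKb].
  set (W0 := fun n => asv_weight 0 0 c d (x * Cpown qc n)).
  destruct (is_Clim_seq_bounded W0 _ (is_Clim_seq_asv_weight 0 0 c d x)) as [Kw HKw].
  set (ia := fun m => / qpoch_inf (a * x * Cpown qc m) qc).
  set (ib := fun m => / qpoch_inf (b * x * Cpown qc m) qc).
  assert (Hterm : forall N n,
    asv_weight (a * Cpown qc N) (b * Cpown qc N) c d (x * Cpown qc n) * Cpown qc n
    = W0 n * Cpown qc n * (ia (N + n)%nat * ib (N + n)%nat)).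
  { intros N n. unfold W0, ia, ib. rewrite asv_weight_00. unfold asv_weight.
    replace (a * Cpown qc N * (x * Cpown qc n)) with (a * x * Cpown qc (N + n))
      by (rewrite Cpown_add; ring).
    replace (b * Cpown qc N * (x * Cpown qc n)) with (b * x * Cpown qc (N + n))
      by (rewrite Cpown_add; ring).
    field. split; now apply qpoch_inf_qgrid_neq_0. }
  unfold qint0. apply is_Clim_seq_scal.
  apply (Csum_dominated_cv _ _ q (Kw * (Ka * Kb))); [lra| |].
  - intros N n. rewrite Hterm, !Cmod_mult, Cmod_Cpown_R by lra.
    pose proof (Cmod_ge_0 (W0 n)). pose proof (Cmod_ge_0 (ia (N + n)%nat)).
    pose proof (Cmod_ge_0 (ib (N + n)%nat)). assert (0 <= q ^ n)%R by (apply pow_le; lra).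
    replace (Kw * (Ka * Kb) * q ^ n)%R with (Kw * q ^ n * (Ka * Kb))%R by ring.
    apply Rmult_le_compat; [nra|nra|apply Rmult_le_compat_r; auto|].
    apply Rmult_le_compat; [auto|auto|apply HKa|apply HKb].
  - intros n.
    apply (is_Clim_seq_ext (fun N => W0 n * Cpown qc n * (ia (N + n)%nat * ib (N + n)%nat)));
      [intros; now rewrite Hterm|].
    apply (is_Clim_seq_eq_l _ (W0 n * Cpown qc n * (/ 1 * / 1))); [|unfold W0; field].
    apply is_Clim_seq_scal, is_Clim_seq_mult;
      [apply (is_Clim_seq_incr_n ia)|apply (is_Clim_seq_incr_n ib)];
      apply is_Clim_seq_inv_qpoch_inf_qgrid.
Qed.

Lemma asv_integral_reduce_00 (a b c d : C) :
  c <> 0 -> d <> 0 ->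
  qpoch_inf (a * c) qc <> 0 -> qpoch_inf (a * d) qc <> 0 ->
  qpoch_inf (b * c) qc <> 0 -> qpoch_inf (b * d) qc <> 0 ->
  asv_integral a b c d *
    (qpoch_inf (a * c) qc * qpoch_inf (a * d) qc * qpoch_inf (b * c) qc * qpoch_inf (b * d) qc)
  = qpoch_inf (a * b * c * d) qc * asv_integral 0 0 c d.
Proof.
  intros Hc Hd Hac Had Hbc Hbd.
  apply (is_Clim_seq_unique (fun N =>
    asv_integral (a * Cpown qc N) (b * Cpown qc N) c d * qpoch (a * b * c * d) qc (N + N))).
  - apply (is_Clim_seq_ext (fun N => asv_integral a b c d *
      (qpoch (a * c) qc N * qpoch (a * d) qc N * qpoch (b * c) qc N * qpoch (b * d) qc N))).
    { intros N. rewrite asv_integral_qpow; auto. ring. }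
    apply is_Clim_seq_scal. repeat apply is_Clim_seq_mult; apply is_Clim_seq_qpoch_inf.
  - rewrite (Cmult_comm (qpoch_inf (a * b * c * d) qc)).
    apply (is_Clim_seq_mult (fun N => asv_integral (a * Cpown qc N) (b * Cpown qc N) c d)).
    + unfold asv_integral, qint.
      apply (is_Clim_seq_minus
        (fun N => qint0 qc (asv_weight (a * Cpown qc N) (b * Cpown qc N) c d) d));
        now apply qint0_asv_weight_qpow_cv.
    + apply (is_Clim_seq_subseq (qpoch (a * b * c * d) qc) _ (fun N => (N + N)%nat));
        [intros; lia|apply is_Clim_seq_qpoch_inf].
Qed.

Lemma asv_integral_00_pole_l (c d : C) :
  c <> 0 -> d <> 0 -> qpoch_inf (d * qc / c) qc = 0 -> asv_integral 0 0 c d = 0.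
Proof.
  intros Hc Hd Hdc.
  destruct (qpoch_inf_eq_0_inv _ Hdc) as [n Hn].
  assert (Ec : c = d * Cpown qc (S n)).
  { transitivity (c * (d * qc / c * Cpown qc n)); [rewrite Hn; ring|]. simpl. field; auto. }
  assert (Hz : forall m, (m < S n)%nat -> asv_weight 0 0 c d (d * Cpown qc m) = 0).
  { intros m Hm. rewrite asv_weight_00.
    rewrite (qpoch_inf_eq_0 (qc * (d * Cpown qc m) / c) (n - m)); [ring|].
    rewrite <- Hn. replace n with (m + (n - m))%nat at 2 by lia.
    rewrite Cpown_add. field. auto. }
  destruct (is_Cseries_jackson_asv 0 0 c d d) as [Hsum _].
  pose proof (qint0_qgrid_shift _ d (S n) _ Hsum Hz) as Hs.
  rewrite <- Ec in Hs. unfold asv_integral, qint. rewrite Hs. ring.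
Qed.

Lemma asv_integral_00_pole_r (c d : C) :
  c <> 0 -> d <> 0 -> qpoch_inf (c / d) qc = 0 -> asv_integral 0 0 c d = 0.
Proof.
  intros Hc Hd Hcd.
  destruct (qpoch_inf_eq_0_inv _ Hcd) as [n Hn].
  assert (Ed : d = c * Cpown qc n).
  { transitivity (d * (c / d * Cpown qc n)); [rewrite Hn; ring|]. field; auto. }
  assert (Hz : forall m, (m < n)%nat -> asv_weight 0 0 c d (c * Cpown qc m) = 0).
  { intros m Hm. rewrite asv_weight_00.
    rewrite (qpoch_inf_eq_0 (qc * (c * Cpown qc m) / d) (n - m - 1)); [ring|].
    rewrite <- Hn. replace n with (S m + (n - m - 1))%nat at 2 by lia.
    rewrite Cpown_add. simpl. field. auto. }
  destruct (is_Cseries_jackson_asv 0 0 c d c) as [Hsum _].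
  pose proof (qint0_qgrid_shift _ c n _ Hsum Hz) as Hs.
  rewrite <- Ed in Hs. unfold asv_integral, qint. rewrite Hs. ring.
Qed.

Lemma asv_integral_q_div (c d : C) :
  c <> 0 -> d <> 0 -> qpoch_inf (d * qc / c) qc <> 0 -> qpoch_inf (c * qc / d) qc <> 0 ->
  asv_integral (qc / c) (qc / d) c d = d - c.
Proof.
  intros Hc Hd Hdc Hcd.
  assert (H1q : 1 - qc <> 0) by (intro E; apply (f_equal Re) in E; simpl in E; lra).
  assert (Hx : forall x, qpoch_inf (qc / c * x) qc <> 0 -> qpoch_inf (qc / d * x) qc <> 0 ->
                 qint0 qc (asv_weight (qc / c) (qc / d) c d) x = x).
  { intros x H1 H2. unfold qint0.
    rewrite (is_Cseries_Csum _ (/ (1 - qc))); [field; auto|].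
    eapply is_Cseries_ext; [|apply is_Cseries_geom; lra].
    intros n. unfold asv_weight.
    pose proof (qpoch_inf_qgrid_neq_0 _ n H1). pose proof (qpoch_inf_qgrid_neq_0 _ n H2).
    replace (qc * (x * Cpown qc n) / c) with (qc / c * (x * Cpown qc n)) by (field; auto).
    replace (qc * (x * Cpown qc n) / d) with (qc / d * (x * Cpown qc n)) by (field; auto).
    rewrite !Cmult_assoc. field. split; auto. }
  pose proof (qpoch_inf_neq_0_lt_1 _ Cmod_qc_lt_1).
  unfold asv_integral, qint. rewrite (Hx d), (Hx c); [reflexivity| | | |].
  - replace (qc / c * c) with qc by (field; auto). auto.
  - replace (qc / d * c) with (c * qc / d) by (field; auto). auto.
  - replace (qc / c * d) with (d * qc / c) by (field; auto). auto.
  - replace (qc / d * d) with qc by (field; auto). auto.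
Qed.

Lemma asv_integral_00_eval (c d : C) :
  c <> 0 -> d <> 0 ->
  asv_integral 0 0 c d =
  d * (1 - qc) * qpoch_inf qc qc * qpoch_inf (d * qc / c) qc * qpoch_inf (c / d) qc.
Proof.
  intros Hc Hd.
  destruct (classic (qpoch_inf (d * qc / c) qc = 0)) as [Hdc|Hdc].
  { rewrite Hdc, asv_integral_00_pole_l; auto. ring. }
  destruct (classic (qpoch_inf (c / d) qc = 0)) as [Hcd|Hcd].
  { rewrite Hcd, asv_integral_00_pole_r; auto. ring. }
  assert (Hcd' : qpoch_inf (c * qc / d) qc <> 0).
  { intro E. apply Hcd. rewrite qpoch_inf_Sl.
    replace (c / d * qc) with (c * qc / d) by (field; auto). rewrite E. ring. }
  pose proof (qpoch_inf_neq_0_lt_1 _ Cmod_qc_lt_1) as Hqq.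
  assert (Hq2 : qpoch_inf (qc * qc) qc <> 0).
  { apply qpoch_inf_neq_0_lt_1. rewrite Cmod_mult.
    pose proof Cmod_qc_lt_1. pose proof (Cmod_ge_0 qc). nra. }
  pose proof (asv_integral_reduce_00 (qc / c) (qc / d) c d Hc Hd) as E.
  replace (qc / c * c) with qc in E by (field; auto).
  replace (qc / c * d) with (d * qc / c) in E by (field; auto).
  replace (qc / d * c) with (c * qc / d) in E by (field; auto).
  replace (qc / d * d) with qc in E by (field; auto).
  replace (qc / c * (qc / d) * c * d) with (qc * qc) in E by (field; auto).
  rewrite asv_integral_q_div in E by auto.
  specialize (E Hqq Hdc Hcd' Hqq).
  rewrite (qpoch_inf_Sl qc) in E |- *. rewrite (qpoch_inf_Sl (c / d)).
  replace (c / d * qc) with (c * qc / d) by (field; auto).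
  replace (asv_integral 0 0 c d)
    with (qpoch_inf (qc * qc) qc * asv_integral 0 0 c d / qpoch_inf (qc * qc) qc)
    by (field; auto).
  rewrite <- E. field. split; auto.
Qed.

Lemma asv_integral_eval (a b c d : C) :
  c <> 0 -> d <> 0 ->
  qpoch_inf (a * c) qc <> 0 -> qpoch_inf (a * d) qc <> 0 ->
  qpoch_inf (b * c) qc <> 0 -> qpoch_inf (b * d) qc <> 0 ->
  asv_integral a b c d
  = d * (1 - qc) * qpoch_inf qc qc * qpoch_inf (d * qc / c) qc * qpoch_inf (c / d) qc
    * qpoch_inf (a * b * c * d) qc
    / (qpoch_inf (a * c) qc * qpoch_inf (a * d) qc * qpoch_inf (b * c) qc * qpoch_inf (b * d) qc).
Proof.
  intros Hc Hd Hac Had Hbc Hbd.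
  transitivity (asv_integral a b c d
    * (qpoch_inf (a * c) qc * qpoch_inf (a * d) qc * qpoch_inf (b * c) qc * qpoch_inf (b * d) qc)
    / (qpoch_inf (a * c) qc * qpoch_inf (a * d) qc * qpoch_inf (b * c) qc * qpoch_inf (b * d) qc));
    [field; repeat split; auto|].
  rewrite asv_integral_reduce_00, asv_integral_00_eval by auto. field. repeat split; auto.
Qed.

Lemma is_Clim_seq_qpow_sub (c x : C) k :
  is_Clim_seq (fun n => qpow_sub (x * Cpown qc n) c qc k) (qpow_sub 0 c qc k).
Proof.
  induction k; simpl; [apply is_Clim_seq_const|].
  apply is_Clim_seq_mult; [exact IHk|].
  apply is_Clim_seq_minus; [apply is_Clim_seq_qgrid|apply is_Clim_seq_const].
Qed.

Lemma asv_weight_moment (a b c d t : C) k :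
  c <> 0 -> t <> 0 ->
  asv_weight a b c d t * (qpoch (c / t) qc k * Cpown t k) =
  qpow_sub 0 c qc k * asv_weight a b (c * Cpown qc k) d t.
Proof.
  intros Hc Ht. pose proof qc_neq_0.
  assert (Hk : Cpown qc k <> 0) by now apply Cpown_neq_0.
  rewrite qpow_sub_qpoch_div, <- (qpow_sub_qpoch_rev t c qc k) by auto.
  unfold asv_weight. rewrite (qpoch_inf_shift (qc * t / (c * Cpown qc k)) k).
  replace (qc * t / (c * Cpown qc k) * Cpown qc k) with (qc * t / c) by (field; auto).
  unfold Cdiv. ring.
Qed.

Lemma qint_asv_weight_moment (a b c d : C) k :
  c <> 0 -> d <> 0 ->
  qint qc (fun t => asv_weight a b c d t * (qpoch (c / t) qc k * Cpown t k)) c d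
  = qpow_sub 0 c qc k * asv_integral a b (c * Cpown qc k) d.
Proof.
  intros Hc Hd. pose proof qc_neq_0.
  set (G := fun t => asv_weight a b c d t * (qpoch (c / t) qc k * Cpown t k)).
  assert (Hgrid : forall (x : C) n, x <> 0 -> x * Cpown qc n <> 0)
    by (intros; apply Cmult_neq_0; auto; now apply Cpown_neq_0).
  assert (HG : forall x : C, x <> 0 -> forall n,
            G (x * Cpown qc n)
            = qpow_sub 0 c qc k * asv_weight a b (c * Cpown qc k) d (x * Cpown qc n))
    by (intros; unfold G; apply asv_weight_moment; auto).
  assert (Hsum : is_Cseries (fun n => G (c * Cpown qc n) * Cpown qc n)
                            (Csum (fun n => G (c * Cpown qc n) * Cpown qc n))).
  { apply (is_Cseries_jackson G c (1 * qpow_sub 0 c qc k)).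
    apply (is_Clim_seq_ext (fun n => asv_weight a b c d (c * Cpown qc n)
                                     * qpow_sub (c * Cpown qc n) c qc k)).
    { intros n. unfold G. rewrite qpow_sub_qpoch_div; auto. }
    apply is_Clim_seq_mult; [apply is_Clim_seq_asv_weight|apply is_Clim_seq_qpow_sub]. }
  (* [(c/t;q)_k] vanishes at [t = c q^m] for [m < k]. *)
  assert (Hz : forall m, (m < k)%nat -> G (c * Cpown qc m) = 0).
  { intros m Hm. unfold G. rewrite (qpoch_eq_0 _ _ m k Hm); [ring|].
    field. split; auto. now apply Cpown_neq_0. }
  unfold qint. rewrite <- (qint0_qgrid_shift G c k _ Hsum Hz).
  rewrite !(qint0_ext G (fun t => qpow_sub 0 c qc k * asv_weight a b (c * Cpown qc k) d t))
    by (intros; apply HG; auto).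
  rewrite !(qint0_scal _ _ _ 1) by apply is_Clim_seq_asv_weight.
  unfold asv_integral, qint. ring.
Qed.

Lemma qint_asv_weight_moment_eval (a b c d : C) k :
  c <> 0 -> d <> 0 ->
  qpoch_inf (a * c) qc <> 0 -> qpoch_inf (a * d) qc <> 0 ->
  qpoch_inf (b * c) qc <> 0 -> qpoch_inf (b * d) qc <> 0 ->
  qint qc (fun t => asv_weight a b c d t * (qpoch (c / t) qc k * Cpown t k)) c d
    * qpoch (a * b * c * d) qc k
  = qpoch (a * c) qc k * qpoch (b * c) qc k * Cpown d k * asv_integral a b c d.
Proof.
  intros Hc Hd Hac Had Hbc Hbd. pose proof qc_neq_0.
  assert (Hk : Cpown qc k <> 0) by now apply Cpown_neq_0.
  rewrite qint_asv_weight_moment by auto.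
  set (c' := c * Cpown qc k).
  assert (Hc' : c' <> 0) by (apply Cmult_neq_0; auto).
  assert (Hac' : qpoch_inf (a * c') qc <> 0)
    by (unfold c'; rewrite Cmult_assoc; now apply qpoch_inf_qgrid_neq_0).
  assert (Hbc' : qpoch_inf (b * c') qc <> 0)
    by (unfold c'; rewrite Cmult_assoc; now apply qpoch_inf_qgrid_neq_0).
  set (P := qpoch_inf (a * c) qc * qpoch_inf (a * d) qc * qpoch_inf (b * c) qc
            * qpoch_inf (b * d) qc).
  assert (HP : P <> 0) by (unfold P; repeat apply Cmult_neq_0; auto).
  assert (AV : asv_integral a b c d * P
               = d * (1 - qc) * qpoch_inf qc qc * qpoch_inf (d * qc / c) qc
                 * qpoch_inf (c / d) qc * qpoch_inf (a * b * c * d) qc)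
    by (rewrite asv_integral_eval by auto; unfold P; field; repeat split; auto).
  assert (AV' : asv_integral a b c' d
                * (qpoch_inf (a * c') qc * qpoch_inf (a * d) qc * qpoch_inf (b * c') qc
                   * qpoch_inf (b * d) qc)
                = d * (1 - qc) * qpoch_inf qc qc * qpoch_inf (d * qc / c') qc
                  * qpoch_inf (c' / d) qc * qpoch_inf (a * b * c' * d) qc)
    by (rewrite asv_integral_eval by auto; field; repeat split; auto).
  assert (E_ac : qpoch_inf (a * c) qc = qpoch (a * c) qc k * qpoch_inf (a * c') qc)
    by (rewrite (qpoch_inf_shift (a * c) k); unfold c'; now rewrite Cmult_assoc).
  assert (E_bc : qpoch_inf (b * c) qc = qpoch (b * c) qc k * qpoch_inf (b * c') qc)
    by (rewrite (qpoch_inf_shift (b * c) k); unfold c'; now rewrite Cmult_assoc).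
  assert (E_cd : qpoch_inf (c / d) qc = qpoch (c / d) qc k * qpoch_inf (c' / d) qc).
  { rewrite (qpoch_inf_shift (c / d) k). unfold c'.
    replace (c / d * Cpown qc k) with (c * Cpown qc k / d) by (field; auto). reflexivity. }
  assert (E_abcd : qpoch_inf (a * b * c * d) qc
                   = qpoch (a * b * c * d) qc k * qpoch_inf (a * b * c' * d) qc).
  { rewrite (qpoch_inf_shift (a * b * c * d) k). unfold c'.
    replace (a * b * c * d * Cpown qc k) with (a * b * (c * Cpown qc k) * d) by ring.
    reflexivity. }
  assert (E_dc : qpoch_inf (d * qc / c') qc = qpoch (d * qc / c') qc k * qpoch_inf (d * qc / c) qc).
  { rewrite (qpoch_inf_shift (d * qc / c') k). unfold c'.
    replace (d * qc / (c * Cpown qc k) * Cpown qc k) with (d * qc / c) by (field; auto).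
    reflexivity. }
  assert (E_pow : qpow_sub 0 c qc k * qpoch (d * qc / c') qc k = qpoch (c / d) qc k * Cpown d k).
  { rewrite qpow_sub_qpoch_div, <- (qpow_sub_qpoch_rev d c qc k) by auto. unfold c'.
    replace (d * qc / (c * Cpown qc k)) with (qc * d / (c * Cpown qc k)) by (field; auto).
    reflexivity. }
  assert (Key : qpow_sub 0 c qc k * asv_integral a b c' d * P * qpoch (a * b * c * d) qc k
                = qpoch (a * c) qc k * qpoch (b * c) qc k * Cpown d k
                  * (asv_integral a b c d * P)).
  { rewrite AV. unfold P. rewrite E_ac, E_bc, E_cd, E_abcd.
    transitivity (qpoch (a * c) qc k * qpoch (b * c) qc k * qpoch (a * b * c * d) qc k
      * qpow_sub 0 c qc k
      * (asv_integral a b c' d * (qpoch_inf (a * c') qc * qpoch_inf (a * d) qc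
                                  * qpoch_inf (b * c') qc * qpoch_inf (b * d) qc))); [ring|].
    rewrite AV', E_dc.
    transitivity (qpoch (a * c) qc k * qpoch (b * c) qc k * qpoch (a * b * c * d) qc k
      * (qpow_sub 0 c qc k * qpoch (d * qc / c') qc k)
      * (d * (1 - qc) * qpoch_inf qc qc * qpoch_inf (d * qc / c) qc * qpoch_inf (c' / d) qc
         * qpoch_inf (a * b * c' * d) qc)); [ring|].
    rewrite E_pow. ring. }
  transitivity (qpow_sub 0 c qc k * asv_integral a b c' d * P * qpoch (a * b * c * d) qc k / P);
    [field; auto|].
  rewrite Key. field. auto.
Qed.

Lemma qint_asv_weight_Cpsum (a b c d : C) (be : nat -> C) N :
  c <> 0 -> d <> 0 ->
  qpoch_inf (a * c) qc <> 0 -> qpoch_inf (a * d) qc <> 0 ->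
  qpoch_inf (b * c) qc <> 0 -> qpoch_inf (b * d) qc <> 0 ->
  (forall n, a * b * c * d * Cpown qc n <> 1) ->
  qint qc (fun t => asv_weight a b c d t
                    * Cpsum (fun k => be k * (qpoch (c / t) qc k * Cpown t k)) N) c d
  = Cpsum (fun k => be k * (qpoch (a * c) qc k * qpoch (b * c) qc k * Cpown d k
                            / qpoch (a * b * c * d) qc k)) N
    * asv_integral a b c d.
Proof.
  intros Hc Hd Hac Had Hbc Hbd Habcd.
  set (G := fun k t => asv_weight a b c d t * (qpoch (c / t) qc k * Cpown t k)).
  assert (HG : forall x : C, x <> 0 -> forall k,
             exists L, is_Clim_seq (fun n => G k (x * Cpown qc n)) L).
  { intros x Hx k. exists (1 * qpow_sub 0 c qc k).
    apply (is_Clim_seq_ext (fun n => asv_weight a b c d (x * Cpown qc n)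
                                     * qpow_sub (x * Cpown qc n) c qc k)).
    { intros n. unfold G. rewrite qpow_sub_qpoch_div; auto.
      apply Cmult_neq_0; auto. apply Cpown_neq_0, qc_neq_0. }
    apply is_Clim_seq_mult; [apply is_Clim_seq_asv_weight|apply is_Clim_seq_qpow_sub]. }
  replace (fun t => asv_weight a b c d t
                    * Cpsum (fun k => be k * (qpoch (c / t) qc k * Cpown t k)) N)
    with (fun t => Cpsum (fun k => be k * G k t) N).
  2: { apply functional_extensionality. intros t. rewrite <- Cpsum_scal.
       apply Cpsum_ext. intros. unfold G. ring. }
  unfold qint. rewrite (qint0_Cpsum G be d N (HG d Hd)), (qint0_Cpsum G be c N (HG c Hc)).
  rewrite <- Cpsum_minus, Cpsum_mult_r. apply Cpsum_ext. intros k _.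
  pose proof (qint_asv_weight_moment_eval a b c d k Hc Hd Hac Had Hbc Hbd) as Hmom.
  unfold qint in Hmom. unfold G.
  assert (Hk : qpoch (a * b * c * d) qc k <> 0) by now apply qpoch_neq_0.
  set (Id := qint0 qc _ d) in *. set (Ic := qint0 qc _ c) in *.
  transitivity (be k * ((Id - Ic) * qpoch (a * b * c * d) qc k) / qpoch (a * b * c * d) qc k);
    [field; auto|].
  rewrite Hmom. field. auto.
Qed.

End QCalculus.

Theorem theorem6 (q : R) (M : nat) (a b c d f g v w : C) :
  (0 < q < 1)%R ->
  b <> 0 -> c <> 0 -> d <> 0 ->
  (forall n : nat, v * Cpown (RtoC q) n <> 1) ->
  (forall n : nat, w * Cpown (RtoC q) n <> 1) ->
  (Cmod (a * c) < 1)%R -> (Cmod (a * d) < 1)%R ->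
  (Cmod (b * c) < 1)%R -> (Cmod (b * d) < 1)%R ->
  (Cmod (RtoC q / (b * c)) < 1)%R ->
  let qc := RtoC q in
  let r := / Cpown qc M in
  qint qc
    (fun t =>
       qpoch_inf (qc * t / c) qc * qpoch_inf (qc * t / d) qc
       / (qpoch_inf (a * t) qc * qpoch_inf (b * t) qc)
       * Csum (fun k =>
           qpoch r qc k * qpoch f qc k * qpoch g qc k * qpoch (c / t) qc k
             * qpoch (a * b * c * d) qc k
           / (qpoch v qc k * qpoch w qc k * qpoch (a * c) qc k * qpoch qc qc k)
           * Cpown (qc * t / (b * c * d)) k
           * phi32 (r * Cpown qc k) (f * Cpown qc k) (g * Cpown qc k)
                   (v * Cpown qc k) (w * Cpown qc k) qc qc))
    c d
  = d * (1 - qc) * qpoch_inf qc qc * qpoch_inf (d * qc / c) qc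
      * qpoch_inf (c / d) qc * qpoch_inf (a * b * c * d) qc
    / (qpoch_inf (a * c) qc * qpoch_inf (a * d) qc
       * qpoch_inf (b * c) qc * qpoch_inf (b * d) qc)
    * phi32 r f g v w qc (qc / (b * c)).
Proof.
  (* Every series terminates since [r = q^-M]. *)
  intros Hq Hb Hc Hd Hv Hw Hac Had Hbc Hbd _ qc r. subst qc r.
  set (r := / Cpown (RtoC q) M).
  assert (Hr : r * Cpown (RtoC q) M = 1) by (unfold r; field; apply Cpown_neq_0, qc_neq_0; auto).
  assert (Habcd : (Cmod (a * b * c * d) < 1)%R).
  { replace (a * b * c * d) with (a * c * (b * d)) by ring. rewrite Cmod_mult.
    pose proof (Cmod_ge_0 (a * c)). nra. }
  set (be := fun k => qpoch r (RtoC q) k * qpoch f (RtoC q) k * qpoch g (RtoC q) k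
       * qpoch (a * b * c * d) (RtoC q) k
       / (qpoch v (RtoC q) k * qpoch w (RtoC q) k * qpoch (a * c) (RtoC q) k
          * qpoch (RtoC q) (RtoC q) k)
       * Cpown (RtoC q / (b * c * d)) k
       * phi32 (r * Cpown (RtoC q) k) (f * Cpown (RtoC q) k) (g * Cpown (RtoC q) k)
               (v * Cpown (RtoC q) k) (w * Cpown (RtoC q) k) (RtoC q) (RtoC q)).
  match goal with |- qint _ ?F _ _ = _ =>
    replace F with (fun t => asv_weight q a b c d t
      * Cpsum (fun k => be k * (qpoch (c / t) (RtoC q) k * Cpown t k)) (S M)) end.
  2: { apply functional_extensionality. intros t. unfold asv_weight. f_equal.
       rewrite (Csum_finite _ (S M))
         by (intros k Hk; rewrite (qpoch_eq_0 r _ M k); [unfold Cdiv; ring|lia|auto]).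
       apply Cpsum_ext. intros k _. unfold be.
       replace (RtoC q * t / (b * c * d)) with (RtoC q / (b * c * d) * t) by (unfold Cdiv; ring).
       rewrite Cpown_mult. unfold Cdiv. ring. }
  rewrite qint_asv_weight_Cpsum, asv_integral_eval by auto using qpoch_inf_neq_0_lt_1, qgrid_neq_1.
  rewrite <- (phi32_terminating_expansion _ r f g v w (b * c) M)
    by auto using Cmult_neq_0, qpoch_neq_0, qgrid_neq_1, Cmod_qc_lt_1.
  rewrite Cmult_comm. f_equal. apply Cpsum_ext. intros k _. unfold be.
  replace (Cpown (RtoC q / (b * c)) k) with (Cpown (RtoC q / (b * c * d)) k * Cpown d k)
    by (rewrite <- Cpown_mult; f_equal; field; auto).
  field. repeat split; apply qpoch_neq_0; auto using qgrid_neq_1, Cmod_qc_lt_1.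
Qed.
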